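(* For all $n\ge1$, $|\dot{\mathcal S}_n|=|\dot{\mathcal S}'_n|=3\cdot 2^{4n+1}$.
   Context: Let $\tau=(1+\sqrt5)/2$, $\tau'=(1-\sqrt5)/2$. Let $\mathbb F_4=\mathbb{Z}[\tau]/2\mathbb{Z}[\tau]$ (elements $\bar0,\bar1,\bar\tau,\bar{\tau'}$) and for $y\in\mathbb{Z}[\tau]^4$ let $\bar y\in\mathbb F_4^4$ be its coordinatewise reduction. Let $\dot A\subset\mathbb F_4^4$ be the 12 vectors obtained from $(\bar0,\bar1,\bar{\tau'},\bar\tau)$ by even permutations of coordinates and $\dot A'$ those obtained by odd permutations. For $n\ge1$, $\dot{\mathcal S}_n=\{x\in 2^{-n}\mathbb{Z}[\tau]^4: x\cdot x=1,\ \overline{2^nx}\in\dot A\}$ and $\dot{\mathcal S}'_n=\{x\in 2^{-n}\mathbb{Z}[\tau]^4: x\cdot x=1,\ \overline{2^nx}\in\dot A'\}$, where $\cdot$ is the standard dot product. *)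

From HB Require Import structures.
From mathcomp Require Import all_boot all_order all_algebra all_fingroup.
Set Implicit Arguments. Unset Strict Implicit. Unset Printing Implicit Defensive.
Import Order.TTheory GRing.Theory Num.Theory.
Local Open Scope ring_scope.

(* Q(tau) = Q(sqrt 5): the pair (a, b) represents a + b*tau, where
   tau = (1 + sqrt 5)/2 satisfies tau^2 = tau + 1.  Z[tau] is the
   subring of pairs of integers. *)
Definition qtau := (rat * rat)%type.

Definition qt_add (u v : qtau) : qtau := (u.1 + v.1, u.2 + v.2).
(* (a + b tau)(c + d tau) = (ac + bd) + (ad + bc + bd) tau *)
Definition qt_mul (u v : qtau) : qtau :=
  (u.1 * v.1 + u.2 * v.2, u.1 * v.2 + u.2 * v.1 + u.2 * v.2).
Definition qt_one : qtau := (1, 0).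

Definition vec4 := {ffun 'I_4 -> qtau}.

Definition dot (x y : vec4) : qtau :=
  foldr qt_add (0, 0) [seq qt_mul (x i) (y i) | i <- enum 'I_4].

Definition zvec4 := {ffun 'I_4 -> (int * int)%type}.

(* F_4 = Z[tau]/2Z[tau]; the class of a + b tau is (a mod 2, b mod 2),
   so 0 = (false,false), 1 = (true,false), tau = (false,true),
   tau' = 1 - tau = (true,true). *)
Definition F4 := (bool * bool)%type.
Definition F4_0 : F4 := (false, false).
Definition F4_1 : F4 := (true, false).
Definition F4_tau : F4 := (false, true).
Definition F4_tau' : F4 := (true, true).

Definition red (z : int * int) : F4 := (odd `|z.1|%N, odd `|z.2|%N).
Definition redv (y : zvec4) : 'I_4 -> F4 := fun i => red (y i).

Definition base4 : 'I_4 -> F4 :=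
  fun i => match val i with 0 => F4_0 | 1 => F4_1 | 2 => F4_tau' | _ => F4_tau end.

Definition dotA (w : 'I_4 -> F4) : Prop :=
  exists s : 'S_4, ~~ odd_perm s /\ forall i, w i = base4 (s i).
Definition dotA' (w : 'I_4 -> F4) : Prop :=
  exists s : 'S_4, odd_perm s /\ forall i, w i = base4 (s i).

Definition scaled (n : nat) (y : zvec4) (x : vec4) : Prop :=
  forall i, x i = ((y i).1%:~R / 2 ^+ n, (y i).2%:~R / 2 ^+ n).

Definition dotS (n : nat) (x : vec4) : Prop :=
  exists y : zvec4, scaled n y x /\ dot x x = qt_one /\ dotA (redv y).
Definition dotS' (n : nat) (x : vec4) : Prop :=
  exists y : zvec4, scaled n y x /\ dot x x = qt_one /\ dotA' (redv y).

Definition has_card (T : eqType) (P : T -> Prop) (k : nat) : Prop :=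
  exists s : seq T, uniq s /\ (forall x, P x <-> x \in s) /\ size s = k.

From HB Require Import structures.
From mathcomp Require Import all_boot all_order all_algebra all_fingroup alt.
From mathcomp Require Import ring zify.
Set Implicit Arguments. Unset Strict Implicit. Unset Printing Implicit Defensive.
Import Order.TTheory GRing.Theory Num.Theory.
Local Open Scope ring_scope.

(* Write a sphere point as x = y / 2^n.  The pattern condition on y modulo 2
   forces y = 2c for an icosian c (an element of the maximal order of the
   quaternion algebra over Q(sqrt 5)), x.x = 1 says that c has reduced norm
   4^(n-1), and as the pattern is nonzero, c is not divisible by 2.  Such
   primitive icosians are counted through the 600 icosians p of norm 2: every
   primitive z of norm 2^(k+2) equals q p for exactly 120 of them (those with
   z * conj p = 0 modulo 2), the quotient q being primitive of norm 2^(k+1).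
   Sorting by residue class modulo 2, by induction each of the 75 nonzero
   singular classes of M_2(F_4) = icosians/2 contains 8 * 4^k primitive
   icosians of norm 2^(k+1).  48 of these classes carry an even pattern, giving
   48 * 8 * 4^(2n-3) points for n >= 2; for n = 1 one counts the 96 suitable
   units among the 120.  Odd patterns are exchanged with even ones by swapping
   the last two coordinates.  The facts about the finitely many norm-2 icosians
   and residue classes are checked by computation. *)

(* An icosian [c] is stored by its eight integer coordinates in a Z-basis of
   the icosian ring.  [icos_coords c] lists, as pairs (a, b) for a + b tau, the
   four Z[tau]-coordinates of 2c in the basis 1, i, j, k of the Hamilton
   quaternions; [icos_mul] is the quaternion product read back in the basis,
   so that 2 (c d) = (2 c) (2 d) / 2, [icos_conj] is quaternion conjugation,
   [icos_tau] multiplication by tau, and the reduced norm of [c] is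
   [icos_norm1 c + icos_norm2 c * tau].  Everything is defined over an
   arbitrary commutative ring so that it can be reduced modulo 2. *)
Notation icos R := (R * R * R * R * R * R * R * R)%type.

Definition icos_mul (R : comPzRingType) (c d : icos R) : icos R :=
  let '(c0, c1, c2, c3, c4, c5, c6, c7) := c in
  let '(d0, d1, d2, d3, d4, d5, d6, d7) := d in
  (- c0*d0 - c0*d1 - c0*d2 - c0*d3 - c0*d5 - c0*d6 - c0*d7 - c1*d0 - c1*d1 - c1*d2 - c1*d3
    - c1*d4 - c1*d5 - c1*d6 - c2*d0 - c2*d1 - 2*c2*d2 - c2*d3 - c2*d4 - c2*d5 - c2*d7 - c3*d0
    - c3*d1 - c3*d2 - 2*c3*d3 - c3*d4 - c3*d6 - c3*d7 - c4*d1 - c4*d2 - c4*d3 - 2*c4*d4 - c5*d0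
    - c5*d1 - c5*d2 - 2*c5*d5 - c6*d0 - c6*d1 - c6*d3 - 2*c6*d6 - c7*d0 - c7*d2 - c7*d3
    - 2*c7*d7,
   - 2*c0*d0 - c0*d1 - 2*c0*d2 - 2*c0*d3 - c0*d4 - c0*d5 - c0*d6 - 2*c0*d7 - c1*d0 - c1*d1
    - 2*c1*d2 - c1*d3 - c1*d4 - 2*c1*d5 - c1*d7 - 2*c2*d0 - 2*c2*d1 - 2*c2*d2 - 2*c2*d3 - c2*d4
    - 2*c2*d5 - c2*d6 - c2*d7 - 2*c3*d0 - c3*d1 - 2*c3*d2 - 2*c3*d3 - c3*d5 - c3*d6 - 2*c3*d7
    - c4*d0 - c4*d1 - c4*d2 - 2*c4*d5 - c5*d0 - 2*c5*d1 - 2*c5*d2 - c5*d3 - 2*c5*d4 - 2*c5*d5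
    - c6*d0 - c6*d2 - c6*d3 - 2*c6*d7 - 2*c7*d0 - c7*d1 - c7*d2 - 2*c7*d3 - 2*c7*d6 - 2*c7*d7,
   - c0*d1 - c0*d4 - c0*d5 + c0*d7 + c1*d0 + c1*d3 - c1*d4 + c1*d6 + c1*d7 + c2*d0 + c2*d3
    - c2*d5 + c2*d6 + c2*d7 - c3*d2 - c3*d4 - c3*d5 + c3*d6 + c4*d0 + c4*d1 + c4*d3 + 2*c4*d6
    + c5*d0 + c5*d2 + c5*d3 + 2*c5*d7 - c6*d1 - c6*d2 - c6*d3 - 2*c6*d4 - c7*d0 - c7*d1 - c7*d2
    - 2*c7*d5,
   - c0*d1 - c0*d2 + c0*d3 - c0*d4 - 2*c0*d5 + c0*d6 + c0*d7 + c1*d0 + c1*d2 + 2*c1*d3 - c1*d5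
    + c1*d6 + 2*c1*d7 + c2*d0 + c2*d3 - c2*d4 - c2*d5 + c2*d6 + 2*c2*d7 - c3*d1 - c3*d2 - c3*d4
    - 2*c3*d5 + c3*d7 + c4*d0 + c4*d2 + c4*d3 + 2*c4*d7 + 2*c5*d0 + c5*d1 + c5*d2 + 2*c5*d3
    + 2*c5*d6 + 2*c5*d7 - c6*d0 - c6*d1 - c6*d2 - 2*c6*d5 - c7*d0 - 2*c7*d1 - 2*c7*d2 - c7*d3
    - 2*c7*d4 - 2*c7*d5,
   c0*d0 + 2*c0*d1 + 2*c0*d2 + c0*d3 + 2*c0*d4 + 2*c0*d5 + c1*d1 + c1*d2 - c1*d3 + c1*d4
    + 2*c1*d5 - c1*d6 - c1*d7 + c2*d1 + c2*d2 + c2*d4 + 2*c2*d5 - c2*d6 - c2*d7 + c3*d0 + c3*d1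
    + 2*c3*d2 + c3*d3 + c3*d4 + 2*c3*d5 - c4*d3 + c4*d5 - c4*d6 - c4*d7 - c5*d0 + c5*d1 - c5*d3
    + c5*d4 + c5*d5 - c5*d6 - 2*c5*d7 + c6*d0 + c6*d1 + 2*c6*d2 + c6*d3 + c6*d4 + c6*d5 + c6*d7
    + 2*c7*d0 + 2*c7*d1 + 2*c7*d2 + 2*c7*d3 + c7*d4 + 2*c7*d5 + c7*d6 + c7*d7,
   2*c0*d0 + 2*c0*d1 + 2*c0*d2 + 2*c0*d3 + c0*d4 + 2*c0*d5 + c0*d6 + c0*d7 + c1*d0 + 2*c1*d1
    + 2*c1*d2 + c1*d3 + 2*c1*d4 + 2*c1*d5 + c2*d0 + 2*c2*d1 + 2*c2*d2 + c2*d3 + c2*d4 + 2*c2*d5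
    + c3*d0 + c3*d1 + 2*c3*d2 + 2*c3*d3 + c3*d4 + c3*d5 + c3*d7 + c4*d1 + c4*d2 + c4*d4 + c4*d5
    - c4*d6 + c5*d0 + 2*c5*d1 + c5*d2 + c5*d4 + 2*c5*d5 - c5*d7 + c6*d0 + c6*d1 + c6*d2
    + 2*c6*d3 + c6*d4 + c6*d6 + c6*d7 + 2*c7*d0 + c7*d1 + 2*c7*d2 + 2*c7*d3 + c7*d5 + c7*d6
    + 2*c7*d7,
   2*c0*d0 + 2*c0*d1 + 2*c0*d2 + c0*d3 + c0*d4 + 2*c0*d5 + c0*d6 + c0*d7 + c1*d0 + c1*d1
    + c1*d2 + c1*d4 + 2*c1*d5 + c2*d0 + 2*c2*d1 + 2*c2*d2 + c2*d3 + 2*c2*d4 + 2*c2*d5 + 2*c3*d0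
    + 2*c3*d1 + 2*c3*d2 + 2*c3*d3 + c3*d4 + 2*c3*d5 + c3*d6 + c3*d7 + c4*d1 + c4*d4 + c4*d5
    - c4*d7 + c5*d1 + c5*d2 - c5*d3 + c5*d4 + 2*c5*d5 - c5*d6 - c5*d7 + 2*c6*d0 + c6*d1 + c6*d2
    + c6*d3 + c6*d5 + c6*d6 + c6*d7 + 2*c7*d0 + 2*c7*d1 + 2*c7*d2 + 2*c7*d3 + c7*d4 + c7*d5
    + c7*d6 + 2*c7*d7,
   c0*d0 + 2*c0*d1 + c0*d2 + c0*d4 + 2*c0*d5 + c1*d1 - c1*d3 + c1*d4 + c1*d5 - c1*d7 + c2*d1
    + c2*d2 - c2*d3 + c2*d4 + 2*c2*d5 - c2*d6 - c2*d7 + c3*d0 + 2*c3*d1 + 2*c3*d2 + c3*d3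
    + 2*c3*d4 + 2*c3*d5 - c4*d0 - c4*d3 + c4*d4 - c4*d6 - c4*d7 - c5*d0 - c5*d2 - 2*c5*d3
    + c5*d5 - c5*d6 - 2*c5*d7 + c6*d0 + 2*c6*d1 + c6*d2 + c6*d3 + c6*d4 + c6*d5 + c6*d6
    + 2*c7*d0 + 2*c7*d1 + 2*c7*d2 + c7*d3 + c7*d4 + 2*c7*d5 + c7*d7).
Definition icos_conj (R : comPzRingType) (c : icos R) : icos R :=
  let '(c0, c1, c2, c3, c4, c5, c6, c7) := c in
  (c0, c1, - c2, - c3, - c1 - c4, - c0 - c1 - c5, - c0 - c1 - c6, - c0 - c7).
Definition icos_tau (R : comPzRingType) (c : icos R) : icos R :=
  let '(c0, c1, c2, c3, c4, c5, c6, c7) := c in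
  (c1, c0 + c1, c3, c2 + c3, - c3 + c5, c2 + c4 + c5, - c1 + c7, c0 + c6 + c7).
Definition icos_norm1 (R : comPzRingType) (c : icos R) : R :=
  let '(c0, c1, c2, c3, c4, c5, c6, c7) := c in
  c0*c1 + c0*c2 + c0*c3 + c0*c5 + c0*c6 + c0*c7 + c0*c0 + c1*c2 + c1*c3 + c1*c4
  + c1*c5 + c1*c6 + c1*c1 + c2*c3 + c2*c4 + c2*c5 + c2*c7 + c2*c2 + c3*c4 + c3*c6
  + c3*c7 + c3*c3 + c4*c4 + c5*c5 + c6*c6 + c7*c7.
Definition icos_norm2 (R : comPzRingType) (c : icos R) : R :=
  let '(c0, c1, c2, c3, c4, c5, c6, c7) := c in
  2*c0*c1 + 2*c0*c2 + 2*c0*c3 + c0*c4 + c0*c5 + c0*c6 + 2*c0*c7 + c0*c0 + 2*c1*c2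
  + c1*c3 + c1*c4 + 2*c1*c5 + c1*c7 + c1*c1 + 2*c2*c3 + c2*c4 + 2*c2*c5 + c2*c6
  + c2*c7 + c2*c2 + c3*c5 + c3*c6 + 2*c3*c7 + c3*c3 + 2*c4*c5 + c5*c5 + 2*c6*c7
  + c7*c7.
Definition icos_coords (R : comPzRingType) (c : icos R) : icos R :=
  let '(c0, c1, c2, c3, c4, c5, c6, c7) := c in
  (c0, c1, c2, c3, c1 + c2 + c3 + 2 * c4, c0 + c1 + c2 + 2 * c5,
   c0 + c1 + c3 + 2 * c6, c0 + c2 + c3 + 2 * c7).

Definition icos_map (R S : Type) (f : R -> S) (c : icos R) : icos S :=
  let '(c0, c1, c2, c3, c4, c5, c6, c7) := c in
  (f c0, f c1, f c2, f c3, f c4, f c5, f c6, f c7).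

Definition icos_scale (R : comPzRingType) (a : R) (c : icos R) : icos R :=
  icos_map ( *%R a) c.
Definition icos_add (R : comPzRingType) (c d : icos R) : icos R :=
  let '(c0, c1, c2, c3, c4, c5, c6, c7) := c in
  let '(d0, d1, d2, d3, d4, d5, d6, d7) := d in
  (c0 + d0, c1 + d1, c2 + d2, c3 + d3, c4 + d4, c5 + d5, c6 + d6, c7 + d7).

Lemma pair8_eq (T : Type) (a0 a1 a2 a3 a4 a5 a6 a7 b0 b1 b2 b3 b4 b5 b6 b7 : T) :
  a0 = b0 -> a1 = b1 -> a2 = b2 -> a3 = b3 -> a4 = b4 -> a5 = b5 -> a6 = b6 -> a7 = b7 ->
  (a0, a1, a2, a3, a4, a5, a6, a7) = (b0, b1, b2, b3, b4, b5, b6, b7).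
Proof. by move=> -> -> -> -> -> -> -> ->. Qed.

Ltac case8 c := case: c => [[[[[[[? ?] ?] ?] ?] ?] ?] ?].

Section IcosMorphism.
Variables (R S : comPzRingType) (f : {rmorphism R -> S}).

Lemma icos_mul_morph (c d : icos R) :
  icos_map f (icos_mul c d) = icos_mul (icos_map f c) (icos_map f d).
Proof.
by case8 c; case8 d; apply: pair8_eq; rewrite ?(rmorph_nat, rmorphB, rmorphN, rmorphD, rmorphM).
Qed.

Lemma icos_coords_morph (c : icos R) :
  icos_map f (icos_coords c) = icos_coords (icos_map f c).
Proof. by case8 c; apply: pair8_eq; rewrite ?(rmorph_nat, rmorphD, rmorphM). Qed.

Lemma icos_norm1_morph (c : icos R) : f (icos_norm1 c) = icos_norm1 (icos_map f c).
Proof. by case8 c; rewrite /= ?(rmorphD, rmorphM). Qed.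

Lemma icos_norm2_morph (c : icos R) : f (icos_norm2 c) = icos_norm2 (icos_map f c).
Proof. by case8 c; rewrite /= ?(rmorph_nat, rmorphD, rmorphM). Qed.

End IcosMorphism.

Section IcosIdentities.
Variable R : comNzRingType.
Implicit Types c d p q : icos R.

Lemma icos_mul_conj q p : icos_mul (icos_mul q p) (icos_conj p) =
  icos_add (icos_scale (icos_norm1 p) q) (icos_scale (icos_norm2 p) (icos_tau q)).
Proof. by case8 q; case8 p; rewrite /=; apply: pair8_eq; ring. Qed.

Lemma icos_conjK : involutive (@icos_conj R).
Proof. by move=> p; case8 p; rewrite /=; apply: pair8_eq; ring. Qed.

Lemma icos_norm1_conj p : icos_norm1 (icos_conj p) = icos_norm1 p.
Proof. by case8 p; rewrite /=; ring. Qed.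

Lemma icos_norm2_conj p : icos_norm2 (icos_conj p) = icos_norm2 p.
Proof. by case8 p; rewrite /=; ring. Qed.

Lemma icos_norm1_mul c d :
  icos_norm1 (icos_mul c d) = icos_norm1 c * icos_norm1 d + icos_norm2 c * icos_norm2 d.
Proof. by case8 c; case8 d; rewrite /=; ring. Qed.

Lemma icos_norm2_mul c d : icos_norm2 (icos_mul c d) =
  icos_norm1 c * icos_norm2 d + icos_norm2 c * icos_norm1 d + icos_norm2 c * icos_norm2 d.
Proof. by case8 c; case8 d; rewrite /=; ring. Qed.

Lemma icos_mul_scalel (a : R) q p : icos_mul (icos_scale a q) p = icos_scale a (icos_mul q p).
Proof. by case8 q; case8 p; rewrite /=; apply: pair8_eq; ring. Qed.

Lemma icos_norm1_scale (a : R) q : icos_norm1 (icos_scale a q) = a ^+ 2 * icos_norm1 q.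
Proof. by case8 q; rewrite /=; ring. Qed.

Lemma icos_norm2_scale (a : R) q : icos_norm2 (icos_scale a q) = a ^+ 2 * icos_norm2 q.
Proof. by case8 q; rewrite /=; ring. Qed.

End IcosIdentities.

Notation icosian := (icos int).
Notation icosian2 := (icos 'F_2).

Definition icos_double (c : icosian) : icosian := icos_scale 2 c.
Definition icos_half (c : icosian) : icosian := icos_map (fun x => (x %/ 2)%Z) c.
Definition icos_norm (c : icosian) : int * int := (icos_norm1 c, icos_norm2 c).

Definition red2 (c : icosian) : icosian2 := icos_map intr c.
Definition zero2 : icosian2 := (0, 0, 0, 0, 0, 0, 0, 0).

Lemma red2_mul c d : red2 (icos_mul c d) = icos_mul (red2 c) (red2 d).
Proof. exact: (icos_mul_morph (intr : {rmorphism int -> 'F_2})). Qed.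
Lemma red2_coords c : red2 (icos_coords c) = icos_coords (red2 c).
Proof. exact: (icos_coords_morph (intr : {rmorphism int -> 'F_2})). Qed.
Lemma red2_norm1 c : (icos_norm1 c)%:~R = icos_norm1 (red2 c) :> 'F_2.
Proof. exact: (icos_norm1_morph (intr : {rmorphism int -> 'F_2})). Qed.
Lemma red2_norm2 c : (icos_norm2 c)%:~R = icos_norm2 (red2 c) :> 'F_2.
Proof. exact: (icos_norm2_morph (intr : {rmorphism int -> 'F_2})). Qed.

Lemma natr_F2_2 : 2%:R = 0 :> 'F_2.
Proof. exact: (pchar_Fp_0 (isT : prime 2)). Qed.

Lemma intr_F2 (x : int) : x%:~R = (odd `|x|%N)%:R :> 'F_2.
Proof.
have F2_nat n : n%:R = (odd n)%:R :> 'F_2 by rewrite -(Fp_nat_mod (isT : prime 2)) modn2.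
case: x => n; first by rewrite -pmulrn; apply: F2_nat.
by rewrite NegzE mulrNz oppr_char2 ?(pchar_Fp (isT : prime 2)) // -pmulrn; apply: F2_nat.
Qed.

Lemma intr_F2_eq0 (x : int) : (x%:~R == 0 :> 'F_2) = ~~ odd `|x|%N.
Proof. by rewrite intr_F2; case: (odd _). Qed.

Lemma even_int_half (x : int) : ~~ odd `|x|%N -> x = 2 * (x %/ 2)%Z.
Proof. by move=> x_even; rewrite mulrC divzK // dvdzE /= dvdn2. Qed.

Lemma red2_eq0 w : red2 w = zero2 -> w = icos_double (icos_half w).
Proof.
case8 w; rewrite /red2 /zero2 /= => -[h0 h1 h2 h3 h4 h5 h6 h7].
by apply: pair8_eq; apply: even_int_half; rewrite -intr_F2_eq0 ?h0 ?h1 ?h2 ?h3 ?h4 ?h5 ?h6 ?h7.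
Qed.

Lemma red2_double q : red2 (icos_double q) = zero2.
Proof.
by case8 q; apply: pair8_eq; rewrite /= intrM (_ : 2%:~R = 2%:R) // natr_F2_2 mul0r.
Qed.

Lemma icos_double_inj : injective icos_double.
Proof. by move=> a b; case8 a; case8 b; rewrite /= => -[*]; apply: pair8_eq; lia. Qed.

Lemma icos_coords_inj : injective (@icos_coords int).
Proof. by move=> a b; case8 a; case8 b; rewrite /= => -[*]; apply: pair8_eq; lia. Qed.

Definition icos_grid (T : Type) (s : seq T) : seq (icos T) :=
  allpairs pair (allpairs pair (allpairs pair (allpairs pair (allpairs pair
    (allpairs pair (allpairs pair s s) s) s) s) s) s) s.

Lemma mem_icos_grid (T : eqType) (s : seq T) (x0 x1 x2 x3 x4 x5 x6 x7 : T) :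
  all (mem s) [:: x0; x1; x2; x3; x4; x5; x6; x7] ->
  (x0, x1, x2, x3, x4, x5, x6, x7) \in icos_grid s.
Proof. by move=> /and5P[? ? ? ? /and4P[? ? ? /andP[? _]]]; rewrite !allpairs_f. Qed.

Definition classes2 : seq icosian2 := icos_grid [:: 0; 1].

Lemma mem_classes2 r : r \in classes2.
Proof.
have F2_mem (x : 'F_2) : x \in [:: 0; 1].
  by case: x => [[|[|//]]] ?; rewrite !inE; apply/orP; [left | right]; apply/eqP/val_inj.
by case8 r; apply: mem_icos_grid; rewrite /= !F2_mem.
Qed.

Lemma uniq_classes2 : uniq classes2.
Proof. by vm_compute. Qed.

Definition icos_box : seq icosian := icos_grid [:: -2; -1; 0; 1; 2].

(* Each of a0..a3 and of the four coordinates of 2c is bounded by the norm,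
   and Cauchy-Schwarz then bounds a4..a7. *)
Lemma mem_icos_box c : icos_norm1 c <= 2 -> c \in icos_box.
Proof.
have sq_ge0 (x : int) : 0 <= x * x by rewrite -expr2 sqr_ge0.
have cauchy_schwarz4 (a b u v : int) :
    (a - b - u - v) * (a - b - u - v) <= 4 * (a * a + b * b + u * u + v * v).
  rewrite -subr_ge0.
  have -> : 4 * (a * a + b * b + u * u + v * v) - (a - b - u - v) * (a - b - u - v) =
    (a + b) * (a + b) + (a + u) * (a + u) + (a + v) * (a + v) + (u - b) * (u - b)
    + (v - b) * (v - b) + (v - u) * (v - u) by ring.
  by rewrite !addr_ge0.
have small (x : int) : x * x <= 8 -> x \in [:: -2; -1; 0; 1; 2].
  by move=> x8; rewrite !inE; nia.
case: c => [[[[[[[a0 a1] a2] a3] a4] a5] a6] a7] hN.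
set y4 := a1 + a2 + a3 + 2 * a4; set y5 := a0 + a1 + a2 + 2 * a5.
set y6 := a0 + a1 + a3 + 2 * a6; set y7 := a0 + a2 + a3 + 2 * a7.
have sum8 : a0*a0 + a1*a1 + a2*a2 + a3*a3 + y4*y4 + y5*y5 + y6*y6 + y7*y7 <= 8.
  suff -> : a0*a0 + a1*a1 + a2*a2 + a3*a3 + y4*y4 + y5*y5 + y6*y6 + y7*y7 =
      4 * icos_norm1 (a0, a1, a2, a3, a4, a5, a6, a7) by lia.
  by rewrite /y4 /y5 /y6 /y7 /=; ring.
have := cauchy_schwarz4 y4 a1 a2 a3; have := cauchy_schwarz4 y5 a0 a1 a2.
have := cauchy_schwarz4 y6 a0 a1 a3; have := cauchy_schwarz4 y7 a0 a2 a3.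
have -> : y4 - a1 - a2 - a3 = 2 * a4 by rewrite /y4; ring.
have -> : y5 - a0 - a1 - a2 = 2 * a5 by rewrite /y5; ring.
have -> : y6 - a0 - a1 - a3 = 2 * a6 by rewrite /y6; ring.
have -> : y7 - a0 - a2 - a3 = 2 * a7 by rewrite /y7; ring.
move: (sq_ge0 a0) (sq_ge0 a1) (sq_ge0 a2) (sq_ge0 a3).
move: (sq_ge0 y4) (sq_ge0 y5) (sq_ge0 y6) (sq_ge0 y7) => *.
by apply: mem_icos_grid; rewrite /= !small //; lia.
Qed.

Definition norm2_icosians : seq icosian := [::
  (-2, 0, -2, 0, 1, 2, 1, 2); (-2, 0, -1, 0, 0, 2, 1, 1); (-2, 0, -1, 0, 0, 2, 1, 2);
  (-2, 0, -1, 0, 1, 1, 1, 1); (-2, 0, -1, 0, 1, 1, 1, 2); (-2, 0, -1, 1, 0, 1, 0, 1);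
  (-2, 0, -1, 1, 0, 1, 1, 1); (-2, 0, -1, 1, 0, 2, 0, 1); (-2, 0, -1, 1, 0, 2, 1, 1);
  (-2, 0, 0, -1, 0, 1, 1, 2); (-2, 0, 0, -1, 0, 1, 2, 1); (-2, 0, 0, -1, 1, 1, 1, 2);
  (-2, 0, 0, -1, 1, 1, 2, 1); (-2, 0, 0, 0, -1, 1, 1, 1); (-2, 0, 0, 0, 0, 1, 0, 1);
  (-2, 0, 0, 0, 0, 1, 2, 1); (-2, 0, 0, 0, 1, 1, 1, 1); (-2, 0, 0, 1, -1, 1, 0, 1);
  (-2, 0, 0, 1, -1, 1, 1, 0); (-2, 0, 0, 1, 0, 1, 0, 1); (-2, 0, 0, 1, 0, 1, 1, 0);
  (-2, 0, 1, -1, 0, 0, 1, 1); (-2, 0, 1, -1, 0, 0, 2, 1); (-2, 0, 1, -1, 0, 1, 1, 1);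
  (-2, 0, 1, -1, 0, 1, 2, 1); (-2, 0, 1, 0, -1, 1, 1, 0); (-2, 0, 1, 0, -1, 1, 1, 1);
  (-2, 0, 1, 0, 0, 0, 1, 0); (-2, 0, 1, 0, 0, 0, 1, 1); (-2, 0, 2, 0, -1, 0, 1, 0);
  (-2, 1, -1, -1, 0, 1, 1, 2); (-2, 1, -1, -1, 1, 1, 1, 2); (-2, 1, -1, 0, 0, 1, 0, 1);
  (-2, 1, -1, 0, 0, 1, 1, 2); (-2, 1, 0, -1, 0, 0, 1, 1); (-2, 1, 0, -1, 0, 0, 1, 2);
  (-2, 1, 0, -1, 0, 1, 1, 1); (-2, 1, 0, -1, 0, 1, 1, 2); (-2, 1, 0, 0, -1, 0, 0, 1);
  (-2, 1, 0, 0, -1, 0, 1, 1); (-2, 1, 0, 0, 0, 1, 0, 1); (-2, 1, 0, 0, 0, 1, 1, 1);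
  (-2, 1, 0, 1, -1, 0, 0, 0); (-2, 1, 0, 1, -1, 0, 0, 1); (-2, 1, 0, 1, -1, 1, 0, 0);
  (-2, 1, 0, 1, -1, 1, 0, 1); (-2, 1, 1, 0, -1, 0, 0, 0); (-2, 1, 1, 0, -1, 0, 1, 1);
  (-2, 1, 1, 1, -2, 0, 0, 0); (-2, 1, 1, 1, -1, 0, 0, 0); (-1, -1, -2, 1, 1, 2, 0, 1);
  (-1, -1, -2, 1, 1, 2, 1, 1); (-1, -1, -1, 0, 0, 2, 1, 1); (-1, -1, -1, 0, 2, 1, 1, 1);
  (-1, -1, -1, 1, 0, 2, 0, 1); (-1, -1, -1, 1, 0, 2, 1, 0); (-1, -1, -1, 1, 1, 1, 0, 1);
  (-1, -1, -1, 1, 1, 1, 1, 0); (-1, -1, 0, 0, 0, 1, 0, 1); (-1, -1, 0, 0, 0, 1, 2, 0);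
  (-1, -1, 0, 0, 1, 1, 0, 1); (-1, -1, 0, 0, 1, 1, 2, 0); (-1, -1, 1, -1, 0, 1, 1, 1);
  (-1, -1, 1, -1, 0, 1, 2, 0); (-1, -1, 1, -1, 1, 0, 1, 1); (-1, -1, 1, -1, 1, 0, 2, 0);
  (-1, -1, 1, 0, -1, 1, 1, 0); (-1, -1, 1, 0, 1, 0, 1, 0); (-1, -1, 2, -1, 0, 0, 1, 0);
  (-1, -1, 2, -1, 0, 0, 2, 0); (-1, 0, -2, 0, 1, 1, 0, 2); (-1, 0, -2, 0, 1, 1, 1, 1);
  (-1, 0, -2, 0, 1, 2, 0, 2); (-1, 0, -2, 0, 1, 2, 1, 1); (-1, 0, -2, 1, 0, 1, 0, 1);
  (-1, 0, -2, 1, 1, 2, 0, 1); (-1, 0, -1, -1, 1, 1, 0, 2); (-1, 0, -1, -1, 1, 1, 2, 1);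
  (-1, 0, -1, 0, 0, 1, 0, 2); (-1, 0, -1, 0, 0, 1, 1, 0); (-1, 0, -1, 0, 0, 2, 0, 1);
  (-1, 0, -1, 0, 0, 2, 1, 1); (-1, 0, -1, 0, 1, 0, 0, 1); (-1, 0, -1, 0, 1, 0, 1, 1);
  (-1, 0, -1, 0, 1, 1, 0, 2); (-1, 0, -1, 0, 1, 1, 1, 0); (-1, 0, -1, 1, -1, 1, 0, 0);
  (-1, 0, -1, 1, -1, 1, 0, 1); (-1, 0, -1, 1, 1, 1, 0, 0); (-1, 0, -1, 1, 1, 1, 0, 1);
  (-1, 0, -1, 2, -1, 1, -1, 0); (-1, 0, -1, 2, -1, 1, 0, 0); (-1, 0, -1, 2, 0, 1, -1, 0);
  (-1, 0, -1, 2, 0, 1, 0, 0); (-1, 0, 0, -1, 0, 1, 0, 1); (-1, 0, 0, -1, 0, 1, 2, 1);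
  (-1, 0, 0, -1, 1, 0, 0, 1); (-1, 0, 0, -1, 1, 0, 2, 1); (-1, 0, 0, 0, -1, 1, 0, 0);
  (-1, 0, 0, 0, -1, 1, 1, 1); (-1, 0, 0, 0, 1, 0, 0, 0); (-1, 0, 0, 0, 1, 0, 1, 1);
  (-1, 0, 0, 1, -1, 1, -1, 0); (-1, 0, 0, 1, -1, 1, 1, 0); (-1, 0, 0, 1, 0, 0, -1, 0);
  (-1, 0, 0, 1, 0, 0, 1, 0); (-1, 0, 1, -2, 0, 0, 1, 1); (-1, 0, 1, -2, 0, 0, 2, 1);
  (-1, 0, 1, -2, 1, 0, 1, 1); (-1, 0, 1, -2, 1, 0, 2, 1); (-1, 0, 1, -1, -1, 0, 1, 0);
  (-1, 0, 1, -1, -1, 0, 1, 1); (-1, 0, 1, -1, 1, 0, 1, 0); (-1, 0, 1, -1, 1, 0, 1, 1);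
  (-1, 0, 1, 0, -1, 0, 0, 1); (-1, 0, 1, 0, -1, 0, 1, -1); (-1, 0, 1, 0, -1, 1, 0, 0);
  (-1, 0, 1, 0, -1, 1, 1, 0); (-1, 0, 1, 0, 0, -1, 0, 0); (-1, 0, 1, 0, 0, -1, 1, 0);
  (-1, 0, 1, 0, 0, 0, 0, 1); (-1, 0, 1, 0, 0, 0, 1, -1); (-1, 0, 1, 1, -1, 0, -1, 0);
  (-1, 0, 1, 1, -1, 0, 1, -1); (-1, 0, 2, -1, -1, -1, 1, 0); (-1, 0, 2, -1, 0, 0, 1, 0);
  (-1, 0, 2, 0, -1, -1, 0, 0); (-1, 0, 2, 0, -1, -1, 1, -1); (-1, 0, 2, 0, -1, 0, 0, 0);
  (-1, 0, 2, 0, -1, 0, 1, -1); (-1, 1, -2, 0, 0, 1, 0, 1); (-1, 1, -2, 0, 0, 1, 0, 2);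
  (-1, 1, -2, 0, 1, 1, 0, 1); (-1, 1, -2, 0, 1, 1, 0, 2); (-1, 1, -1, -1, 0, 1, 0, 2);
  (-1, 1, -1, -1, 0, 1, 1, 1); (-1, 1, -1, -1, 1, 0, 0, 2); (-1, 1, -1, -1, 1, 0, 1, 1);
  (-1, 1, -1, 0, 0, 0, -1, 1); (-1, 1, -1, 0, 0, 0, 1, 1); (-1, 1, -1, 0, 0, 1, -1, 1);
  (-1, 1, -1, 0, 0, 1, 1, 1); (-1, 1, -1, 1, -1, 0, -1, 1); (-1, 1, -1, 1, -1, 0, 0, 0);
  (-1, 1, -1, 1, -1, 1, -1, 0); (-1, 1, -1, 1, -1, 1, 0, 1); (-1, 1, -1, 1, 0, 0, -1, 0);
  (-1, 1, -1, 1, 0, 0, 0, 1); (-1, 1, -1, 1, 0, 1, -1, 1); (-1, 1, -1, 1, 0, 1, 0, 0);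
  (-1, 1, -1, 2, -1, 0, -1, 0); (-1, 1, -1, 2, -1, 1, -1, 0); (-1, 1, 0, -1, -1, 0, 0, 1);
  (-1, 1, 0, -1, -1, 0, 1, 1); (-1, 1, 0, -1, 0, 0, 0, 2); (-1, 1, 0, -1, 0, 0, 1, 0);
  (-1, 1, 0, -1, 1, 0, 0, 1); (-1, 1, 0, -1, 1, 0, 1, 1); (-1, 1, 0, 0, -1, 1, 0, 0);
  (-1, 1, 0, 0, -1, 1, 0, 1); (-1, 1, 0, 0, 0, -1, 0, 0); (-1, 1, 0, 0, 0, -1, 0, 1);
  (-1, 1, 0, 1, -2, 0, -1, 0); (-1, 1, 0, 1, -2, 0, 0, 0); (-1, 1, 0, 1, -1, 0, -1, 1);
  (-1, 1, 0, 1, -1, 0, 0, -1); (-1, 1, 0, 1, 0, 0, -1, 0); (-1, 1, 0, 1, 0, 0, 0, 0);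
  (-1, 1, 1, -2, 0, -1, 1, 1); (-1, 1, 1, -2, 0, 0, 1, 1); (-1, 1, 1, -1, -1, -1, 0, 1);
  (-1, 1, 1, -1, -1, -1, 1, 0); (-1, 1, 1, -1, -1, 0, 0, 0); (-1, 1, 1, -1, -1, 0, 1, 1);
  (-1, 1, 1, -1, 0, -1, 0, 0); (-1, 1, 1, -1, 0, -1, 1, 1); (-1, 1, 1, -1, 0, 0, 0, 1);
  (-1, 1, 1, -1, 0, 0, 1, 0); (-1, 1, 1, 0, -1, -1, -1, 0); (-1, 1, 1, 0, -1, -1, 1, 0);
  (-1, 1, 1, 0, -1, 0, -1, 0); (-1, 1, 1, 0, -1, 0, 1, 0); (-1, 1, 1, 1, -2, 0, -1, 0);
  (-1, 1, 1, 1, -2, 0, 0, -1); (-1, 1, 1, 1, -1, -1, -1, 0); (-1, 1, 1, 1, -1, -1, 0, -1);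
  (-1, 1, 2, 0, -2, -1, 0, -1); (-1, 1, 2, 0, -2, -1, 0, 0); (-1, 1, 2, 0, -1, -1, 0, -1);
  (-1, 1, 2, 0, -1, -1, 0, 0); (-1, 2, -1, 0, -1, 0, -1, 1); (-1, 2, -1, 0, -1, 0, 0, 1);
  (-1, 2, -1, 0, 0, 0, -1, 1); (-1, 2, -1, 0, 0, 0, 0, 1); (-1, 2, -1, 1, -1, 0, -1, 0);
  (-1, 2, -1, 1, -1, 0, -1, 1); (-1, 2, 0, -1, -1, 0, 0, 1); (-1, 2, 0, -1, 0, -1, 0, 1);
  (-1, 2, 0, 0, -1, -1, -1, 1); (-1, 2, 0, 0, -1, -1, 0, 0); (-1, 2, 0, 0, -1, 0, -1, 1);
  (-1, 2, 0, 0, -1, 0, 0, 0); (-1, 2, 0, 1, -2, 0, -1, 0); (-1, 2, 0, 1, -1, -1, -1, 0);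
  (-1, 2, 1, -1, -1, -1, 0, 0); (-1, 2, 1, -1, -1, -1, 0, 1); (-1, 2, 1, 0, -2, -1, -1, 0);
  (-1, 2, 1, 0, -2, -1, 0, 0); (-1, 2, 1, 0, -1, -1, -1, 0); (-1, 2, 1, 0, -1, -1, 0, 0);
  (0, -1, -2, 0, 1, 2, 0, 1); (0, -1, -2, 0, 1, 2, 1, 1); (0, -1, -2, 0, 2, 1, 0, 1);
  (0, -1, -2, 0, 2, 1, 1, 1); (0, -1, -2, 1, 1, 1, 0, 0); (0, -1, -2, 1, 1, 1, 0, 1);
  (0, -1, -2, 1, 1, 2, 0, 0); (0, -1, -2, 1, 1, 2, 0, 1); (0, -1, -1, 0, 0, 1, 0, 1);
  (0, -1, -1, 0, 0, 1, 1, 0); (0, -1, -1, 0, 2, 1, 0, 1); (0, -1, -1, 0, 2, 1, 1, 0);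
  (0, -1, -1, 1, 0, 1, -1, 0); (0, -1, -1, 1, 0, 1, 1, 0); (0, -1, -1, 1, 0, 2, 0, 0);
  (0, -1, -1, 1, 1, 0, 0, 0); (0, -1, -1, 1, 1, 1, -1, 0); (0, -1, -1, 1, 1, 1, 1, 0);
  (0, -1, -1, 2, 0, 1, -1, 0); (0, -1, -1, 2, 0, 1, 0, -1); (0, -1, 0, -1, 0, 1, 1, 0);
  (0, -1, 0, -1, 0, 1, 1, 1); (0, -1, 0, -1, 1, 0, 0, 1); (0, -1, 0, -1, 1, 0, 2, 0);
  (0, -1, 0, -1, 1, 1, 0, 1); (0, -1, 0, -1, 1, 1, 2, 0); (0, -1, 0, -1, 2, 0, 1, 0);
  (0, -1, 0, -1, 2, 0, 1, 1); (0, -1, 0, 0, 0, 1, 0, 1); (0, -1, 0, 0, 0, 1, 1, -1);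
  (0, -1, 0, 0, 1, 0, 0, 1); (0, -1, 0, 0, 1, 0, 1, -1); (0, -1, 0, 1, -1, 1, 0, -1);
  (0, -1, 0, 1, -1, 1, 0, 0); (0, -1, 0, 1, 0, 0, -1, 0); (0, -1, 0, 1, 0, 0, 1, -1);
  (0, -1, 0, 1, 0, 1, -1, 0); (0, -1, 0, 1, 0, 1, 1, -1); (0, -1, 0, 1, 1, 0, 0, -1);
  (0, -1, 0, 1, 1, 0, 0, 0); (0, -1, 1, -2, 1, 0, 1, 1); (0, -1, 1, -2, 1, 0, 2, 0);
  (0, -1, 1, -1, 0, 0, 0, 0); (0, -1, 1, -1, 0, 0, 2, 0); (0, -1, 1, -1, 0, 1, 1, 0);
  (0, -1, 1, -1, 1, -1, 1, 0); (0, -1, 1, -1, 1, 0, 0, 0); (0, -1, 1, -1, 1, 0, 2, 0);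
  (0, -1, 1, 0, -1, 0, 0, 0); (0, -1, 1, 0, -1, 0, 1, -1); (0, -1, 1, 0, 1, 0, 0, 0);
  (0, -1, 1, 0, 1, 0, 1, -1); (0, -1, 2, -1, 0, -1, 1, -1); (0, -1, 2, -1, 0, -1, 1, 0);
  (0, -1, 2, -1, 0, 0, 1, -1); (0, -1, 2, -1, 0, 0, 1, 0); (0, -1, 2, 0, -1, 0, 0, -1);
  (0, -1, 2, 0, -1, 0, 1, -1); (0, -1, 2, 0, 0, -1, 0, -1); (0, -1, 2, 0, 0, -1, 1, -1);
  (0, 0, -2, 0, 0, 1, 0, 1); (0, 0, -2, 0, 1, 1, -1, 1); (0, 0, -2, 0, 1, 1, 1, 1);
  (0, 0, -2, 0, 2, 1, 0, 1); (0, 0, -2, 1, 0, 1, -1, 0); (0, 0, -2, 1, 0, 1, 0, 1);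
  (0, 0, -2, 1, 1, 1, -1, 0); (0, 0, -2, 1, 1, 1, 0, 1); (0, 0, -1, -1, 0, 1, 0, 1);
  (0, 0, -1, -1, 0, 1, 1, 1); (0, 0, -1, -1, 2, 0, 0, 1); (0, 0, -1, -1, 2, 0, 1, 1);
  (0, 0, -1, 0, 0, 0, -1, 1); (0, 0, -1, 0, 0, 0, 1, 0); (0, 0, -1, 0, 1, 1, -1, 1);
  (0, 0, -1, 0, 1, 1, 1, 0); (0, 0, -1, 1, 0, 0, -1, 1); (0, 0, -1, 1, 0, 0, 0, -1);
  (0, 0, -1, 1, 0, 1, -1, 1); (0, 0, -1, 1, 0, 1, 0, -1); (0, 0, -1, 2, -1, 1, -1, -1);
  (0, 0, -1, 2, -1, 1, -1, 0); (0, 0, -1, 2, 0, 0, -1, -1); (0, 0, -1, 2, 0, 0, -1, 0);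
  (0, 0, 0, -1, 0, 1, 0, 1); (0, 0, 0, -1, 0, 1, 1, 0); (0, 0, 0, -1, 1, -1, 0, 1);
  (0, 0, 0, -1, 1, -1, 1, 0); (0, 0, 0, 0, -1, 0, -1, 0); (0, 0, 0, 0, -1, 0, 1, 0);
  (0, 0, 0, 0, 1, 0, -1, 0); (0, 0, 0, 0, 1, 0, 1, 0); (0, 0, 0, 1, -1, 1, -1, 0);
  (0, 0, 0, 1, -1, 1, 0, -1); (0, 0, 0, 1, 0, -1, -1, 0); (0, 0, 0, 1, 0, -1, 0, -1);
  (0, 0, 1, -2, 0, 0, 1, 0); (0, 0, 1, -2, 0, 0, 1, 1); (0, 0, 1, -2, 1, -1, 1, 0);
  (0, 0, 1, -2, 1, -1, 1, 1); (0, 0, 1, -1, 0, -1, 0, 1); (0, 0, 1, -1, 0, -1, 1, -1);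
  (0, 0, 1, -1, 0, 0, 0, 1); (0, 0, 1, -1, 0, 0, 1, -1); (0, 0, 1, 0, -1, -1, -1, 0);
  (0, 0, 1, 0, -1, -1, 1, -1); (0, 0, 1, 0, 0, 0, -1, 0); (0, 0, 1, 0, 0, 0, 1, -1);
  (0, 0, 1, 1, -2, 0, -1, -1); (0, 0, 1, 1, -2, 0, 0, -1); (0, 0, 1, 1, 0, -1, -1, -1);
  (0, 0, 1, 1, 0, -1, 0, -1); (0, 0, 2, -1, -1, -1, 0, -1); (0, 0, 2, -1, -1, -1, 1, 0);
  (0, 0, 2, -1, 0, -1, 0, -1); (0, 0, 2, -1, 0, -1, 1, 0); (0, 0, 2, 0, -2, -1, 0, -1);
  (0, 0, 2, 0, -1, -1, -1, -1); (0, 0, 2, 0, -1, -1, 1, -1); (0, 0, 2, 0, 0, -1, 0, -1);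
  (0, 1, -2, 0, 0, 1, -1, 1); (0, 1, -2, 0, 0, 1, 0, 1); (0, 1, -2, 0, 1, 0, -1, 1);
  (0, 1, -2, 0, 1, 0, 0, 1); (0, 1, -2, 1, 0, 0, -1, 0); (0, 1, -2, 1, 0, 0, -1, 1);
  (0, 1, -2, 1, 0, 1, -1, 0); (0, 1, -2, 1, 0, 1, -1, 1); (0, 1, -1, 0, -1, 0, -1, 1);
  (0, 1, -1, 0, -1, 0, 0, 0); (0, 1, -1, 0, 1, 0, -1, 1); (0, 1, -1, 0, 1, 0, 0, 0);
  (0, 1, -1, 1, -1, 0, -2, 0); (0, 1, -1, 1, -1, 0, 0, 0); (0, 1, -1, 1, -1, 1, -1, 0);
  (0, 1, -1, 1, 0, -1, -1, 0); (0, 1, -1, 1, 0, 0, -2, 0); (0, 1, -1, 1, 0, 0, 0, 0);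
  (0, 1, -1, 2, -1, 0, -2, 0); (0, 1, -1, 2, -1, 0, -1, -1); (0, 1, 0, -1, -1, 0, 0, 0);
  (0, 1, 0, -1, -1, 0, 0, 1); (0, 1, 0, -1, 0, -1, -1, 1); (0, 1, 0, -1, 0, -1, 1, 0);
  (0, 1, 0, -1, 0, 0, -1, 1); (0, 1, 0, -1, 0, 0, 1, 0); (0, 1, 0, -1, 1, -1, 0, 0);
  (0, 1, 0, -1, 1, -1, 0, 1); (0, 1, 0, 0, -1, 0, -1, 1); (0, 1, 0, 0, -1, 0, 0, -1);
  (0, 1, 0, 0, 0, -1, -1, 1); (0, 1, 0, 0, 0, -1, 0, -1); (0, 1, 0, 1, -2, 0, -1, -1);
  (0, 1, 0, 1, -2, 0, -1, 0); (0, 1, 0, 1, -1, -1, -2, 0); (0, 1, 0, 1, -1, -1, 0, -1);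
  (0, 1, 0, 1, -1, 0, -2, 0); (0, 1, 0, 1, -1, 0, 0, -1); (0, 1, 0, 1, 0, -1, -1, -1);
  (0, 1, 0, 1, 0, -1, -1, 0); (0, 1, 1, -2, 0, -1, 0, 1); (0, 1, 1, -2, 0, -1, 1, 0);
  (0, 1, 1, -1, -1, -1, -1, 0); (0, 1, 1, -1, -1, -1, 1, 0); (0, 1, 1, -1, -1, 0, 0, 0);
  (0, 1, 1, -1, 0, -2, 0, 0); (0, 1, 1, -1, 0, -1, -1, 0); (0, 1, 1, -1, 0, -1, 1, 0);
  (0, 1, 1, 0, -2, -1, -1, 0); (0, 1, 1, 0, -2, -1, 0, -1); (0, 1, 1, 0, 0, -1, -1, 0);
  (0, 1, 1, 0, 0, -1, 0, -1); (0, 1, 2, -1, -1, -2, 0, -1); (0, 1, 2, -1, -1, -2, 0, 0);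
  (0, 1, 2, -1, -1, -1, 0, -1); (0, 1, 2, -1, -1, -1, 0, 0); (0, 1, 2, 0, -2, -1, -1, -1);
  (0, 1, 2, 0, -2, -1, 0, -1); (0, 1, 2, 0, -1, -2, -1, -1); (0, 1, 2, 0, -1, -2, 0, -1);
  (1, -2, -1, 0, 1, 1, 0, 0); (1, -2, -1, 0, 1, 1, 1, 0); (1, -2, -1, 0, 2, 1, 0, 0);
  (1, -2, -1, 0, 2, 1, 1, 0); (1, -2, -1, 1, 1, 1, 0, -1); (1, -2, -1, 1, 1, 1, 0, 0);
  (1, -2, 0, -1, 1, 1, 1, 0); (1, -2, 0, -1, 2, 0, 1, 0); (1, -2, 0, 0, 1, 0, 0, 0);
  (1, -2, 0, 0, 1, 0, 1, -1); (1, -2, 0, 0, 1, 1, 0, 0); (1, -2, 0, 0, 1, 1, 1, -1);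
  (1, -2, 0, 1, 0, 1, 0, -1); (1, -2, 0, 1, 1, 0, 0, -1); (1, -2, 1, -1, 1, 0, 1, -1);
  (1, -2, 1, -1, 1, 0, 1, 0); (1, -2, 1, 0, 0, 0, 0, -1); (1, -2, 1, 0, 0, 0, 1, -1);
  (1, -2, 1, 0, 1, 0, 0, -1); (1, -2, 1, 0, 1, 0, 1, -1); (1, -1, -2, 0, 1, 1, 0, 0);
  (1, -1, -2, 0, 1, 1, 0, 1); (1, -1, -2, 0, 2, 1, 0, 0); (1, -1, -2, 0, 2, 1, 0, 1);
  (1, -1, -1, -1, 1, 1, 0, 1); (1, -1, -1, -1, 1, 1, 1, 0); (1, -1, -1, -1, 2, 0, 0, 1);
  (1, -1, -1, -1, 2, 0, 1, 0); (1, -1, -1, 0, 1, 0, -1, 0); (1, -1, -1, 0, 1, 0, 1, 0);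
  (1, -1, -1, 0, 1, 1, -1, 0); (1, -1, -1, 0, 1, 1, 1, 0); (1, -1, -1, 1, 0, 0, -1, 0);
  (1, -1, -1, 1, 0, 0, 0, -1); (1, -1, -1, 1, 0, 1, -1, -1); (1, -1, -1, 1, 0, 1, 0, 0);
  (1, -1, -1, 1, 1, 0, -1, -1); (1, -1, -1, 1, 1, 0, 0, 0); (1, -1, -1, 1, 1, 1, -1, 0);
  (1, -1, -1, 1, 1, 1, 0, -1); (1, -1, -1, 2, 0, 0, -1, -1); (1, -1, -1, 2, 0, 1, -1, -1);
  (1, -1, 0, -1, 0, 0, 0, 0); (1, -1, 0, -1, 0, 0, 1, 0); (1, -1, 0, -1, 1, 0, 0, 1);
  (1, -1, 0, -1, 1, 0, 1, -1); (1, -1, 0, -1, 2, 0, 0, 0); (1, -1, 0, -1, 2, 0, 1, 0);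
  (1, -1, 0, 0, 0, 1, 0, -1); (1, -1, 0, 0, 0, 1, 0, 0); (1, -1, 0, 0, 1, -1, 0, -1);
  (1, -1, 0, 0, 1, -1, 0, 0); (1, -1, 0, 1, -1, 0, -1, -1); (1, -1, 0, 1, -1, 0, 0, -1);
  (1, -1, 0, 1, 0, 0, -1, 0); (1, -1, 0, 1, 0, 0, 0, -2); (1, -1, 0, 1, 1, 0, -1, -1);
  (1, -1, 0, 1, 1, 0, 0, -1); (1, -1, 1, -2, 1, -1, 1, 0); (1, -1, 1, -2, 1, 0, 1, 0);
  (1, -1, 1, -1, 0, -1, 0, 0); (1, -1, 1, -1, 0, -1, 1, -1); (1, -1, 1, -1, 0, 0, 0, -1);
  (1, -1, 1, -1, 0, 0, 1, 0); (1, -1, 1, -1, 1, -1, 0, -1); (1, -1, 1, -1, 1, -1, 1, 0);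
  (1, -1, 1, -1, 1, 0, 0, 0); (1, -1, 1, -1, 1, 0, 1, -1); (1, -1, 1, 0, 0, -1, -1, -1);
  (1, -1, 1, 0, 0, -1, 1, -1); (1, -1, 1, 0, 0, 0, -1, -1); (1, -1, 1, 0, 0, 0, 1, -1);
  (1, -1, 1, 1, -1, 0, -1, -1); (1, -1, 1, 1, -1, 0, 0, -2); (1, -1, 1, 1, 0, -1, -1, -1);
  (1, -1, 1, 1, 0, -1, 0, -2); (1, -1, 2, 0, -1, -1, 0, -2); (1, -1, 2, 0, -1, -1, 0, -1);
  (1, -1, 2, 0, 0, -1, 0, -2); (1, -1, 2, 0, 0, -1, 0, -1); (1, 0, -2, 0, 1, 0, -1, 1);
  (1, 0, -2, 0, 1, 0, 0, 0); (1, 0, -2, 0, 1, 1, -1, 1); (1, 0, -2, 0, 1, 1, 0, 0);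
  (1, 0, -2, 1, 0, 0, -1, 0); (1, 0, -2, 1, 1, 1, -1, 0); (1, 0, -1, -1, 1, 0, -1, 1);
  (1, 0, -1, -1, 1, 0, 1, 0); (1, 0, -1, 0, 0, 0, -1, 1); (1, 0, -1, 0, 0, 0, 0, -1);
  (1, 0, -1, 0, 0, 1, -1, 0); (1, 0, -1, 0, 0, 1, 0, 0); (1, 0, -1, 0, 1, -1, -1, 0);
  (1, 0, -1, 0, 1, -1, 0, 0); (1, 0, -1, 0, 1, 0, -1, 1); (1, 0, -1, 0, 1, 0, 0, -1);
  (1, 0, -1, 1, -1, 0, -1, -1); (1, 0, -1, 1, -1, 0, -1, 0); (1, 0, -1, 1, 1, 0, -1, -1);
  (1, 0, -1, 1, 1, 0, -1, 0); (1, 0, -1, 2, -1, 0, -2, -1); (1, 0, -1, 2, -1, 0, -1, -1);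
  (1, 0, -1, 2, 0, 0, -2, -1); (1, 0, -1, 2, 0, 0, -1, -1); (1, 0, 0, -1, 0, 0, -1, 0);
  (1, 0, 0, -1, 0, 0, 1, 0); (1, 0, 0, -1, 1, -1, -1, 0); (1, 0, 0, -1, 1, -1, 1, 0);
  (1, 0, 0, 0, -1, 0, -1, -1); (1, 0, 0, 0, -1, 0, 0, 0); (1, 0, 0, 0, 1, -1, -1, -1);
  (1, 0, 0, 0, 1, -1, 0, 0); (1, 0, 0, 1, -1, 0, -2, -1); (1, 0, 0, 1, -1, 0, 0, -1);
  (1, 0, 0, 1, 0, -1, -2, -1); (1, 0, 0, 1, 0, -1, 0, -1); (1, 0, 1, -2, 0, -1, 0, 0);
  (1, 0, 1, -2, 0, -1, 1, 0); (1, 0, 1, -2, 1, -1, 0, 0); (1, 0, 1, -2, 1, -1, 1, 0);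
  (1, 0, 1, -1, -1, -1, 0, -1); (1, 0, 1, -1, -1, -1, 0, 0); (1, 0, 1, -1, 1, -1, 0, -1);
  (1, 0, 1, -1, 1, -1, 0, 0); (1, 0, 1, 0, -1, -1, -1, 0); (1, 0, 1, 0, -1, -1, 0, -2);
  (1, 0, 1, 0, -1, 0, -1, -1); (1, 0, 1, 0, -1, 0, 0, -1); (1, 0, 1, 0, 0, -2, -1, -1);
  (1, 0, 1, 0, 0, -2, 0, -1); (1, 0, 1, 0, 0, -1, -1, 0); (1, 0, 1, 0, 0, -1, 0, -2);
  (1, 0, 1, 1, -1, -1, -2, -1); (1, 0, 1, 1, -1, -1, 0, -2); (1, 0, 2, -1, -1, -2, 0, -1);
  (1, 0, 2, -1, 0, -1, 0, -1); (1, 0, 2, 0, -1, -2, -1, -1); (1, 0, 2, 0, -1, -2, 0, -2);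
  (1, 0, 2, 0, -1, -1, -1, -1); (1, 0, 2, 0, -1, -1, 0, -2); (1, 1, -2, 1, 0, 0, -2, 0);
  (1, 1, -2, 1, 0, 0, -1, 0); (1, 1, -1, 0, -1, 0, -1, 0); (1, 1, -1, 0, 1, -1, -1, 0);
  (1, 1, -1, 1, -1, 0, -2, 0); (1, 1, -1, 1, -1, 0, -1, -1); (1, 1, -1, 1, 0, -1, -2, 0);
  (1, 1, -1, 1, 0, -1, -1, -1); (1, 1, 0, 0, -1, -1, -2, 0); (1, 1, 0, 0, -1, -1, 0, -1);
  (1, 1, 0, 0, 0, -1, -2, 0); (1, 1, 0, 0, 0, -1, 0, -1); (1, 1, 1, -1, -1, -1, -1, 0);
  (1, 1, 1, -1, -1, -1, 0, -1); (1, 1, 1, -1, 0, -2, -1, 0); (1, 1, 1, -1, 0, -2, 0, -1);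
  (1, 1, 1, 0, -2, -1, -1, -1); (1, 1, 1, 0, 0, -2, -1, -1); (1, 1, 2, -1, -1, -2, -1, -1);
  (1, 1, 2, -1, -1, -2, 0, -1); (2, -1, -1, -1, 1, 0, 0, 0); (2, -1, -1, -1, 2, 0, 0, 0);
  (2, -1, -1, 0, 1, 0, -1, -1); (2, -1, -1, 0, 1, 0, 0, 0); (2, -1, 0, -1, 1, -1, 0, -1);
  (2, -1, 0, -1, 1, -1, 0, 0); (2, -1, 0, -1, 1, 0, 0, -1); (2, -1, 0, -1, 1, 0, 0, 0);
  (2, -1, 0, 0, 0, -1, -1, -1); (2, -1, 0, 0, 0, -1, 0, -1); (2, -1, 0, 0, 1, 0, -1, -1);
  (2, -1, 0, 0, 1, 0, 0, -1); (2, -1, 0, 1, 0, -1, -1, -2); (2, -1, 0, 1, 0, -1, -1, -1);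
  (2, -1, 0, 1, 0, 0, -1, -2); (2, -1, 0, 1, 0, 0, -1, -1); (2, -1, 1, 0, 0, -1, -1, -2);
  (2, -1, 1, 0, 0, -1, 0, -1); (2, -1, 1, 1, -1, -1, -1, -2); (2, -1, 1, 1, 0, -1, -1, -2);
  (2, 0, -2, 0, 1, 0, -1, 0); (2, 0, -1, 0, 0, 0, -1, -1); (2, 0, -1, 0, 0, 0, -1, 0);
  (2, 0, -1, 0, 1, -1, -1, -1); (2, 0, -1, 0, 1, -1, -1, 0); (2, 0, -1, 1, 0, -1, -2, -1);
  (2, 0, -1, 1, 0, -1, -1, -1); (2, 0, -1, 1, 0, 0, -2, -1); (2, 0, -1, 1, 0, 0, -1, -1);
  (2, 0, 0, -1, 0, -1, -1, 0); (2, 0, 0, -1, 0, -1, 0, -1); (2, 0, 0, -1, 1, -1, -1, 0);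
  (2, 0, 0, -1, 1, -1, 0, -1); (2, 0, 0, 0, -1, -1, -1, -1); (2, 0, 0, 0, 0, -1, -2, -1);
  (2, 0, 0, 0, 0, -1, 0, -1); (2, 0, 0, 0, 1, -1, -1, -1); (2, 0, 0, 1, -1, -1, -2, -1);
  (2, 0, 0, 1, -1, -1, -1, -2); (2, 0, 0, 1, 0, -1, -2, -1); (2, 0, 0, 1, 0, -1, -1, -2);
  (2, 0, 1, -1, 0, -2, -1, -1); (2, 0, 1, -1, 0, -2, 0, -1); (2, 0, 1, -1, 0, -1, -1, -1);
  (2, 0, 1, -1, 0, -1, 0, -1); (2, 0, 1, 0, -1, -1, -1, -2); (2, 0, 1, 0, -1, -1, -1, -1);
  (2, 0, 1, 0, 0, -2, -1, -2); (2, 0, 1, 0, 0, -2, -1, -1); (2, 0, 2, 0, -1, -2, -1, -2)].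

Definition unit_icosians : seq icosian := [::
  (-2, 0, 0, 0, 0, 1, 1, 1); (-1, 0, -1, 0, 0, 1, 0, 1); (-1, 0, -1, 0, 0, 1, 1, 1);
  (-1, 0, -1, 0, 1, 1, 0, 1); (-1, 0, -1, 0, 1, 1, 1, 1); (-1, 0, -1, 1, 0, 1, 0, 0);
  (-1, 0, -1, 1, 0, 1, 0, 1); (-1, 0, 0, -1, 0, 1, 1, 1); (-1, 0, 0, -1, 1, 0, 1, 1);
  (-1, 0, 0, 0, 0, 0, 0, 1); (-1, 0, 0, 0, 0, 0, 1, 0); (-1, 0, 0, 0, 0, 1, 0, 1);
  (-1, 0, 0, 0, 0, 1, 1, 0); (-1, 0, 0, 1, -1, 1, 0, 0); (-1, 0, 0, 1, 0, 0, 0, 0);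
  (-1, 0, 1, -1, 0, 0, 1, 0); (-1, 0, 1, -1, 0, 0, 1, 1); (-1, 0, 1, 0, -1, 0, 0, 0);
  (-1, 0, 1, 0, -1, 0, 1, 0); (-1, 0, 1, 0, 0, 0, 0, 0); (-1, 0, 1, 0, 0, 0, 1, 0);
  (-1, 1, -1, 0, 0, 0, 0, 1); (-1, 1, -1, 0, 0, 1, 0, 1); (-1, 1, 0, -1, 0, 0, 0, 1);
  (-1, 1, 0, -1, 0, 0, 1, 1); (-1, 1, 0, 0, -1, 0, 0, 0); (-1, 1, 0, 0, -1, 0, 0, 1);
  (-1, 1, 0, 0, 0, 0, 0, 0); (-1, 1, 0, 0, 0, 0, 0, 1); (-1, 1, 0, 1, -1, 0, -1, 0);
  (-1, 1, 0, 1, -1, 0, 0, 0); (-1, 1, 1, 0, -1, -1, 0, 0); (-1, 1, 1, 0, -1, 0, 0, 0);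
  (0, -1, -1, 0, 1, 1, 0, 1); (0, -1, -1, 0, 1, 1, 1, 0); (0, -1, -1, 1, 0, 1, 0, 0);
  (0, -1, -1, 1, 1, 1, 0, 0); (0, -1, 0, 0, 0, 1, 0, 0); (0, -1, 0, 0, 0, 1, 1, 0);
  (0, -1, 0, 0, 1, 0, 0, 0); (0, -1, 0, 0, 1, 0, 1, 0); (0, -1, 1, -1, 0, 0, 1, 0);
  (0, -1, 1, -1, 1, 0, 1, 0); (0, -1, 1, 0, 0, 0, 0, 0); (0, -1, 1, 0, 0, 0, 1, -1);
  (0, 0, -2, 0, 1, 1, 0, 1); (0, 0, -1, 0, 0, 1, 0, 0); (0, 0, -1, 0, 0, 1, 0, 1);
  (0, 0, -1, 0, 1, 0, 0, 0); (0, 0, -1, 0, 1, 0, 0, 1); (0, 0, -1, 1, 0, 0, -1, 0);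
  (0, 0, -1, 1, 0, 0, 0, 0); (0, 0, -1, 1, 0, 1, -1, 0); (0, 0, -1, 1, 0, 1, 0, 0);
  (0, 0, 0, -1, 0, 0, 0, 1); (0, 0, 0, -1, 0, 0, 1, 0); (0, 0, 0, -1, 1, 0, 0, 1);
  (0, 0, 0, -1, 1, 0, 1, 0); (0, 0, 0, 0, -1, 0, 0, 0); (0, 0, 0, 0, 0, 0, -1, 0);
  (0, 0, 0, 0, 0, 0, 1, 0); (0, 0, 0, 0, 1, 0, 0, 0); (0, 0, 0, 1, -1, 0, -1, 0);
  (0, 0, 0, 1, -1, 0, 0, -1); (0, 0, 0, 1, 0, 0, -1, 0); (0, 0, 0, 1, 0, 0, 0, -1);
  (0, 0, 1, -1, 0, -1, 0, 0); (0, 0, 1, -1, 0, -1, 1, 0); (0, 0, 1, -1, 0, 0, 0, 0);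
  (0, 0, 1, -1, 0, 0, 1, 0); (0, 0, 1, 0, -1, 0, 0, -1); (0, 0, 1, 0, -1, 0, 0, 0);
  (0, 0, 1, 0, 0, -1, 0, -1); (0, 0, 1, 0, 0, -1, 0, 0); (0, 0, 2, 0, -1, -1, 0, -1);
  (0, 1, -1, 0, 0, 0, -1, 1); (0, 1, -1, 0, 0, 0, 0, 0); (0, 1, -1, 1, -1, 0, -1, 0);
  (0, 1, -1, 1, 0, 0, -1, 0); (0, 1, 0, 0, -1, 0, -1, 0); (0, 1, 0, 0, -1, 0, 0, 0);
  (0, 1, 0, 0, 0, -1, -1, 0); (0, 1, 0, 0, 0, -1, 0, 0); (0, 1, 1, -1, -1, -1, 0, 0);
  (0, 1, 1, -1, 0, -1, 0, 0); (0, 1, 1, 0, -1, -1, -1, 0); (0, 1, 1, 0, -1, -1, 0, -1);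
  (1, -1, -1, 0, 1, 0, 0, 0); (1, -1, -1, 0, 1, 1, 0, 0); (1, -1, 0, -1, 1, 0, 0, 0);
  (1, -1, 0, -1, 1, 0, 1, 0); (1, -1, 0, 0, 0, 0, 0, -1); (1, -1, 0, 0, 0, 0, 0, 0);
  (1, -1, 0, 0, 1, 0, 0, -1); (1, -1, 0, 0, 1, 0, 0, 0); (1, -1, 0, 1, 0, 0, -1, -1);
  (1, -1, 0, 1, 0, 0, 0, -1); (1, -1, 1, 0, 0, -1, 0, -1); (1, -1, 1, 0, 0, 0, 0, -1);
  (1, 0, -1, 0, 0, 0, -1, 0); (1, 0, -1, 0, 0, 0, 0, 0); (1, 0, -1, 0, 1, 0, -1, 0);
  (1, 0, -1, 0, 1, 0, 0, 0); (1, 0, -1, 1, 0, 0, -1, -1); (1, 0, -1, 1, 0, 0, -1, 0);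
  (1, 0, 0, -1, 0, 0, 0, 0); (1, 0, 0, -1, 1, -1, 0, 0); (1, 0, 0, 0, 0, -1, -1, 0);
  (1, 0, 0, 0, 0, -1, 0, -1); (1, 0, 0, 0, 0, 0, -1, 0); (1, 0, 0, 0, 0, 0, 0, -1);
  (1, 0, 0, 1, -1, 0, -1, -1); (1, 0, 0, 1, 0, -1, -1, -1); (1, 0, 1, -1, 0, -1, 0, -1);
  (1, 0, 1, -1, 0, -1, 0, 0); (1, 0, 1, 0, -1, -1, -1, -1); (1, 0, 1, 0, -1, -1, 0, -1);
  (1, 0, 1, 0, 0, -1, -1, -1); (1, 0, 1, 0, 0, -1, 0, -1); (2, 0, 0, 0, 0, -1, -1, -1)].

Lemma norm2_icosiansE : [seq c <- icos_box | icos_norm c == (2, 0)] = norm2_icosians.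
Proof. by apply/eqP; vm_compute. Qed.

Lemma unit_icosiansE : [seq c <- icos_box | icos_norm c == (1, 0)] = unit_icosians.
Proof. by apply/eqP; vm_compute. Qed.

Lemma mem_norm2_icosians c : (c \in norm2_icosians) = (icos_norm c == (2, 0)).
Proof.
rewrite -norm2_icosiansE mem_filter andb_idr // => /eqP[N1c _].
by apply: mem_icos_box; rewrite N1c.
Qed.

Lemma mem_unit_icosians c : (c \in unit_icosians) = (icos_norm c == (1, 0)).
Proof.
rewrite -unit_icosiansE mem_filter andb_idr // => /eqP[N1c _].
by apply: mem_icos_box; rewrite N1c.
Qed.

Lemma uniq_norm2_icosians : uniq norm2_icosians.
Proof. by vm_compute. Qed.

Lemma uniq_unit_icosians : uniq unit_icosians.
Proof. by vm_compute. Qed.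

(* Modulo 2 the icosian ring becomes the matrix ring M_2(F_4); its nonzero
   elements of norm zero are the 75 matrices of rank one. *)
Definition singular2 (r : icosian2) : bool :=
  [&& r != zero2, icos_norm1 r == 0 & icos_norm2 r == 0].
Definition singular_classes : seq icosian2 := filter singular2 classes2.

Definition F4_of (a b : 'F_2) : F4 := (a == 1, b == 1).
Definition pattern_of (y : icosian2) : F4 * F4 * F4 * F4 :=
  let '(y0, y1, y2, y3, y4, y5, y6, y7) := y in
  (F4_of y0 y1, F4_of y2 y3, F4_of y4 y5, F4_of y6 y7).

Definition even_patterns : seq (F4 * F4 * F4 * F4) := [::
  (F4_0, F4_1, F4_tau', F4_tau); (F4_0, F4_tau', F4_tau, F4_1);
  (F4_0, F4_tau, F4_1, F4_tau'); (F4_1, F4_0, F4_tau, F4_tau');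
  (F4_1, F4_tau', F4_0, F4_tau); (F4_1, F4_tau, F4_tau', F4_0);
  (F4_tau', F4_0, F4_1, F4_tau); (F4_tau', F4_1, F4_tau, F4_0);
  (F4_tau', F4_tau, F4_0, F4_1); (F4_tau, F4_0, F4_tau', F4_1);
  (F4_tau, F4_1, F4_0, F4_tau'); (F4_tau, F4_tau', F4_1, F4_0)].

Definition even_class (r : icosian2) : bool :=
  pattern_of (icos_coords r) \in even_patterns.

Lemma count_red2_norm2 r :
  count (fun p => red2 p == r) norm2_icosians = if singular2 r then 8%N else 0%N.
Proof.
have /allP/(_ r (mem_classes2 r))/eqP : let classes := map red2 norm2_icosians in
  all (fun r => count (pred1 r) classes == if singular2 r then 8%N else 0%N) classes2.
  by vm_compute.
by rewrite count_map.
Qed.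

Lemma count_conj_annihilators r : singular2 r ->
  count (fun p => icos_mul r (red2 (icos_conj p)) == zero2) norm2_icosians = 120%N.
Proof.
have /allP sing_ok : let conjs := [seq red2 (icos_conj p) | p <- norm2_icosians] in
    all (fun r => count (fun t => icos_mul r t == zero2) conjs == 120%N) singular_classes.
  by vm_compute.
move=> sr; rewrite -(count_map (fun p => red2 (icos_conj p)) (fun t => icos_mul r t == zero2)).
by apply/eqP/sing_ok; rewrite mem_filter sr mem_classes2.
Qed.

Lemma count_singular_products r : singular2 r ->
  count (pred1 r) [seq icos_mul s t | s <- singular_classes, t <- singular_classes] = 60%N.
Proof.
have /allP sing_ok :
    let products := [seq icos_mul s t | s <- singular_classes, t <- singular_classes] in
    all (fun r => count (pred1 r) products == 60%N) singular_classes.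
  by vm_compute.
by move=> sr; apply/eqP/sing_ok; rewrite mem_filter sr mem_classes2.
Qed.

Lemma count_even_singular : count even_class singular_classes = 48%N.
Proof. by vm_compute. Qed.

Lemma count_even_units : count (fun c => even_class (red2 c)) unit_icosians = 96%N.
Proof. by vm_compute. Qed.

Lemma even_class0 : even_class zero2 = false.
Proof. by vm_compute. Qed.

(* The parity conditions under which an element of Z[tau]^4 is 2c for an icosian c. *)
Definition coords_parity (r : icosian2) : bool :=
  let '(r0, r1, r2, r3, r4, r5, r6, r7) := r in
  [&& r4 == r1 + r2 + r3, r5 == r0 + r1 + r2, r6 == r0 + r1 + r3 & r7 == r0 + r2 + r3].

Lemma even_pattern_parity r : pattern_of r \in even_patterns -> coords_parity r.
Proof. by apply/implyP; move: r (mem_classes2 r); apply/allP; vm_compute. Qed.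

Arguments norm2_icosians : simpl never.
Arguments unit_icosians : simpl never.
Arguments singular_classes : simpl never.
Arguments classes2 : simpl never.

Lemma count_sum (T : Type) (P : pred T) (s : seq T) :
  count P s = (\sum_(x <- s) P x)%N.
Proof. by elim: s => [|x s IH]; rewrite ?big_nil ?big_cons //= IH. Qed.

Lemma count_allpairs (S T U : Type) (f : S -> T -> U) (P : pred U) s t :
  count P [seq f x y | x <- s, y <- t] = (\sum_(x <- s) count (fun y => P (f x y)) t)%N.
Proof. by elim: s => [|x s IH]; rewrite ?big_nil // big_cons /= count_cat count_map IH. Qed.

Lemma count_undup_const (T : eqType) (s : seq T) (m : nat) (P : pred T) :
  (forall z, z \in s -> count_mem z s = m) -> count P s = (m * count P (undup s))%N.
Proof.
move=> s_m; rewrite -((seq.permP (perm_count_undup s)) P) count_flatten -map_comp.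
rewrite (_ : map _ (undup s) = [seq (P x * m)%N | x <- undup s]); last first.
  by apply/eq_in_map => x; rewrite mem_undup => sx /=; rewrite count_nseq s_m.
by rewrite sumnE big_map count_sum -big_distrl /= mulnC.
Qed.

Section SumByClass.
Variables (T : Type) (K : eqType) (classes : seq K).
Hypotheses (classes_uniq : uniq classes) (mem_classes : forall k, k \in classes).

Lemma sum_by_class (s : seq T) (key : T -> K) (F : K -> nat) :
  (\sum_(x <- s) F (key x) = \sum_(k <- classes) count (fun x => key x == k) s * F k)%N.
Proof.
elim: s => [|x s IH]; first by rewrite big_nil big1_seq // => k _; rewrite mul0n.
rewrite big_cons IH /=.
under [in RHS]eq_bigr => k _ do rewrite mulnDl.
rewrite big_split /=; congr (_ + _)%N.
rewrite (bigD1_seq (key x)) //= eqxx mul1n big1 ?addn0 // => k.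
by rewrite eq_sym => /negbTE ->.
Qed.

Lemma sum_by_singular {s : seq T} {key : T -> K} {singular : pred K} {c : nat} :
  (forall k, count (fun x => key x == k) s = if singular k then c else 0%N) ->
  forall F : K -> nat,
  (\sum_(x <- s) F (key x) = c * \sum_(k <- classes | singular k) F k)%N.
Proof.
move=> s_k F; rewrite sum_by_class big_distrr [RHS]big_mkcond /=.
by apply: eq_bigr => k _; rewrite s_k; case: (singular k); rewrite ?mul0n ?muln0.
Qed.

End SumByClass.

Lemma icos_norm_mul a b : icos_norm (icos_mul a b) =
  (icos_norm1 a * icos_norm1 b + icos_norm2 a * icos_norm2 b,
   icos_norm1 a * icos_norm2 b + icos_norm2 a * icos_norm1 b + icos_norm2 a * icos_norm2 b).
Proof. by rewrite /icos_norm icos_norm1_mul icos_norm2_mul. Qed.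

Lemma icos_norm_double q : icos_norm (icos_double q) = (4 * icos_norm1 q, 4 * icos_norm2 q).
Proof. by rewrite /icos_norm icos_norm1_scale icos_norm2_scale. Qed.

Lemma icos_mul_doublel q p : icos_mul (icos_double q) p = icos_double (icos_mul q p).
Proof. exact: icos_mul_scalel. Qed.

Lemma norm2_mul_conj q p :
  icos_norm p = (2, 0) -> icos_mul (icos_mul q p) (icos_conj p) = icos_double q.
Proof.
by case=> N1p N2p; rewrite icos_mul_conj N1p N2p; case8 q; rewrite /=; apply: pair8_eq; ring.
Qed.

Lemma norm2_mul_conjl z p :
  icos_norm p = (2, 0) -> icos_mul (icos_mul z (icos_conj p)) p = icos_double z.
Proof.
move=> Np; rewrite -{2}(icos_conjK p); apply: norm2_mul_conj.
by rewrite /icos_norm icos_norm1_conj icos_norm2_conj.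
Qed.

Lemma singular2_red2 k z :
  icos_norm z = (2 ^+ k.+1, 0) -> red2 z != zero2 -> singular2 (red2 z).
Proof.
case=> N1z N2z z_nz; rewrite /singular2 z_nz -red2_norm1 -red2_norm2 N1z N2z.
by rewrite rmorph0 rmorphXn rmorph_nat natr_F2_2 expr0n /= eqxx.
Qed.

(* If [z * conj p] is divisible by 2 then [p] divides [z] on the right, as [conj p * p = 2]. *)
Lemma norm2_right_quotient k z p :
  icos_norm z = (2 ^+ k.+2, 0) -> red2 z != zero2 -> p \in norm2_icosians ->
  red2 (icos_mul z (icos_conj p)) = zero2 ->
  let q := icos_half (icos_mul z (icos_conj p)) in
  [/\ icos_norm q = (2 ^+ k.+1, 0), red2 q != zero2 & icos_mul q p = z].
Proof.
move=> Nz z_nz; rewrite mem_norm2_icosians => /eqP Np zp_even q.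
have zp_double : icos_mul z (icos_conj p) = icos_double q := red2_eq0 zp_even.
have qp_z : icos_mul q p = z.
  by apply: icos_double_inj; rewrite -icos_mul_doublel -zp_double norm2_mul_conjl.
split=> //.
- have : icos_norm (icos_double q) = icos_norm (icos_mul z (icos_conj p)) by rewrite zp_double.
  move: Nz Np; rewrite icos_norm_double icos_norm_mul icos_norm1_conj icos_norm2_conj.
  rewrite /icos_norm => -[-> ->] [-> ->] [N1q N2q].
  by congr pair; apply: (mulfI (_ : (4 : int) != 0)) => //; rewrite ?N1q ?N2q !exprS; ring.
- apply: contra z_nz => /eqP q_even.
  by rewrite -qp_z (red2_eq0 q_even) icos_mul_doublel red2_double.
Qed.

Definition right_products (s : seq icosian) : seq icosian :=
  [seq z <- [seq icos_mul q p | q <- s, p <- norm2_icosians] | red2 z != zero2].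

Definition primitives (k : nat) : seq icosian :=
  iter k (fun s => undup (right_products s)) norm2_icosians.

Lemma mem_primitives k z :
  (z \in primitives k) = (icos_norm z == (2 ^+ k.+1, 0)) && (red2 z != zero2).
Proof.
elim: k z => [|k IH] z.
  rewrite /= mem_norm2_icosians expr1; case: eqP => //= Nz; symmetry.
  apply: contraTneq isT => /red2_eq0 z_double; move: Nz.
  by rewrite z_double icos_norm_double => -[]; lia.
rewrite /= mem_undup mem_filter andbC; apply/andP/andP => -[].
  case/allpairsP => -[q p] /= [+ + ->]; rewrite IH mem_norm2_icosians.
  case/andP => /eqP Nq _ /eqP Np qp_nz; split=> //; apply/eqP.
  move: Nq Np; rewrite icos_norm_mul /icos_norm => -[-> ->] [-> ->].
  by rewrite [in RHS]exprS; congr pair; ring.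
move=> /eqP Nz z_nz; split=> //.
have [p p_norm2 zp_even] : exists2 p, p \in norm2_icosians &
    icos_mul (red2 z) (red2 (icos_conj p)) == zero2.
  by apply/hasP; rewrite has_count count_conj_annihilators // (singular2_red2 Nz).
have [Nq q_nz <-] := norm2_right_quotient Nz z_nz p_norm2 (etrans (red2_mul _ _) (eqP zp_even)).
by apply: allpairs_f => //; rewrite IH Nq eqxx.
Qed.

Lemma uniq_primitives k : uniq (primitives k).
Proof. by case: k => [|k]; [exact: uniq_norm2_icosians | exact: undup_uniq]. Qed.

Lemma singular2_primitives k z : z \in primitives k -> singular2 (red2 z).
Proof. by rewrite mem_primitives => /andP[/eqP Nz]; apply: singular2_red2 Nz. Qed.

Lemma count_right_factors k z p :
  icos_norm z = (2 ^+ k.+2, 0) -> red2 z != zero2 -> p \in norm2_icosians ->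
  count (fun q => icos_mul q p == z) (primitives k) =
  (icos_mul (red2 z) (red2 (icos_conj p)) == zero2).
Proof.
move=> Nz z_nz p_norm2.
have Np : icos_norm p = (2, 0) by apply/eqP; rewrite -mem_norm2_icosians.
case: eqP => [zp_even | zp_odd].
  rewrite -red2_mul in zp_even.
  have [Nq q_nz qp_z] := norm2_right_quotient Nz z_nz p_norm2 zp_even.
  set q := icos_half _ in Nq q_nz qp_z.
  rewrite (@eq_count _ _ (pred1 q)) ?count_uniq_mem ?uniq_primitives //.
    by rewrite mem_primitives Nq eqxx q_nz.
  move=> q' /=; apply/eqP/eqP => [q'p_z | ->] //; apply: icos_double_inj.
  by rewrite -(norm2_mul_conj q' Np) q'p_z (red2_eq0 zp_even).
apply/eqP; rewrite -leqn0 leqNgt -has_count; apply/hasP => -[q _ /eqP q'p_z].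
by apply: zp_odd; rewrite -red2_mul -q'p_z norm2_mul_conj // red2_double.
Qed.

Lemma count_mem_right_products k z : z \in right_products (primitives k) ->
  count_mem z (right_products (primitives k)) = 120%N.
Proof.
move=> z_prod; have : z \in primitives k.+1.
  by change (z \in undup (right_products (primitives k))); rewrite mem_undup.
rewrite mem_primitives => /andP[/eqP Nz z_nz].
rewrite count_filter (@eq_count _ _ (pred1 z)); last first.
  by move=> x /=; case: eqP => // ->; rewrite z_nz.
rewrite count_allpairs; under eq_bigr => q _ do rewrite count_sum.
rewrite exchange_big /=; under eq_big_seq => p p_norm2 do
  rewrite -count_sum (count_right_factors Nz z_nz p_norm2).
by rewrite -count_sum count_conj_annihilators // (singular2_red2 Nz).
Qed.

Lemma count_norm2_mul_class s r :
  count (fun p => icos_mul s (red2 p) == r) norm2_icosians =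
  (8 * count (fun t => icos_mul s t == r) singular_classes)%N.
Proof.
rewrite !count_sum (sum_by_singular uniq_classes2 mem_classes2 count_red2_norm2
  (fun t => icos_mul s t == r : nat)).
by rewrite big_filter.
Qed.

Lemma count_primitives_class k r :
  count (fun z => red2 z == r) (primitives k) = if singular2 r then (8 * 4 ^ k)%N else 0%N.
Proof.
elim: k r => [|k IH] r; first by rewrite count_red2_norm2 expn0 muln1.
case: ifP => [r_sing | r_reg]; last first.
  apply/eqP; rewrite -leqn0 leqNgt -has_count; apply/hasP => -[z /singular2_primitives].
  by move=> + /eqP z_r; rewrite z_r r_reg.
have r_nz : r != zero2 by case/and3P: r_sing.
have products : count (fun z => red2 z == r) (right_products (primitives k)) =
    (8 * 4 ^ k * (8 * 60))%N.
  rewrite count_filter (@eq_count _ _ (fun z => red2 z == r)); last first.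
    by move=> z /=; case: eqP => // ->; rewrite r_nz.
  have count_q q : count (fun p => red2 (icos_mul q p) == r) norm2_icosians =
      (8 * count (fun t => icos_mul (red2 q) t == r) singular_classes)%N.
    by rewrite -count_norm2_mul_class; apply: eq_count => p; rewrite /= red2_mul.
  rewrite count_allpairs; under eq_bigr => q _ do rewrite count_q.
  rewrite (sum_by_singular uniq_classes2 mem_classes2 IH
    (fun s => 8 * count (fun t => icos_mul s t == r) singular_classes)%N).
  rewrite -big_filter -big_distrr -(count_allpairs (@icos_mul _) (pred1 r)).
  by rewrite count_singular_products // mulnA.
change (primitives k.+1) with (undup (right_products (primitives k))).
have := count_undup_const (fun z => red2 z == r) (@count_mem_right_products k).
rewrite products expnS => counts.
by apply/eqP; rewrite -(eqn_pmul2l (isT : (0 < 120)%N)) -counts; apply/eqP; lia.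
Qed.

Definition sphere_icosians (n : nat) : seq icosian :=
  [seq c <- if n is m.+2 then primitives (2 * m).+1 else unit_icosians | even_class (red2 c)].

Lemma size_sphere_icosians n : (0 < n)%N -> size (sphere_icosians n) = (3 * 2 ^ (4 * n + 1))%N.
Proof.
case: n => [//|[_|m _]]; rewrite size_filter; first exact: count_even_units.
rewrite -[X in count _ X]/(primitives (2 * m).+1) count_sum.
rewrite (sum_by_singular uniq_classes2 mem_classes2 (count_primitives_class _)
  (fun r => even_class r : nat)).
rewrite -big_filter -count_sum count_even_singular -[(4 ^ _)%N]/((2 ^ 2) ^ _)%N -expnM.
rewrite (_ : 4 * m.+2 + 1 = 2 * (2 * m).+1 + 7)%N ?expnD; last lia.
by set y := (2 ^ _)%N; lia.
Qed.

Lemma mem_sphere_icosians n c : (0 < n)%N ->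
  (c \in sphere_icosians n) = (icos_norm c == (2 ^+ (2 * n.-1), 0)) && even_class (red2 c).
Proof.
case: n => [|[|m]] // _; rewrite mem_filter andbC ?mem_unit_icosians //.
rewrite mem_primitives (_ : (2 * m).+2 = 2 * m.+1)%N; last lia.
case even_c: (even_class (red2 c)); rewrite ?andbF ?andbT //=.
by case: eqP => //= _; apply: contraTneq even_c => ->; rewrite even_class0.
Qed.

Lemma uniq_sphere_icosians n : uniq (sphere_icosians n).
Proof.
apply: filter_uniq; case: n => [|[|m]]; [exact: uniq_unit_icosians | exact: uniq_unit_icosians |].
exact: uniq_primitives.
Qed.

Definition o0 : 'I_4 := @Ordinal 4 0 isT.
Definition o1 : 'I_4 := @Ordinal 4 1 isT.
Definition o2 : 'I_4 := @Ordinal 4 2 isT.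
Definition o3 : 'I_4 := @Ordinal 4 3 isT.

Lemma ord4P (i : 'I_4) : [\/ i = o0, i = o1, i = o2 | i = o3].
Proof.
case: i => [[|[|[|[|//]]]] ?]; [constructor 1 | constructor 2 | constructor 3 | constructor 4];
  exact: val_inj.
Qed.

Lemma enum_ord4 : enum 'I_4 = [:: o0; o1; o2; o3].
Proof. by apply: (inj_map val_inj); rewrite val_enum_ord. Qed.

Definition tup4 (T : Type) (w : 'I_4 -> T) : T * T * T * T := (w o0, w o1, w o2, w o3).

Lemma tup4_inj (T : Type) (w v : 'I_4 -> T) : tup4 w = tup4 v -> w =1 v.
Proof. by case=> e0 e1 e2 e3 i; case: (ord4P i) => ->. Qed.

Definition perm_pattern (s : {perm 'I_4}) : F4 * F4 * F4 * F4 := tup4 (fun i => base4 (s i)).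

Definition even_perms : seq {perm 'I_4} := [:: 1;
  tperm o1 o2 * tperm o1 o3; tperm o1 o2 * tperm o2 o3; tperm o0 o1 * tperm o2 o3;
  tperm o0 o1 * tperm o0 o2; tperm o0 o1 * tperm o0 o3; tperm o0 o1 * tperm o1 o2;
  tperm o0 o2 * tperm o0 o3; tperm o0 o2 * tperm o1 o3; tperm o0 o1 * tperm o1 o3;
  tperm o0 o2 * tperm o2 o3; tperm o0 o3 * tperm o1 o2]%g.

Lemma even_perm_patterns : map perm_pattern even_perms = even_patterns.
Proof. by rewrite [map _ _]/= /perm_pattern /tup4 !permM !perm1 /tperm !permE. Qed.

(* The twelve listed permutations are distinct and even, hence all of 'Alt_4. *)
Lemma mem_even_perms s : (s \in even_perms) = ~~ odd_perm s.
Proof.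
have even_all : all (fun s => ~~ odd_perm s) even_perms.
  by rewrite /= odd_perm1 !odd_permM !odd_tperm.
have uniq_even : uniq even_perms.
  by apply: (@map_uniq _ _ perm_pattern); rewrite even_perm_patterns.
have card_even : #|even_perms| = #|('Alt_('I_4))%g|.
  have : (2 * #|('Alt_('I_4))%g| = 4`!)%N by rewrite -{2}(card_ord 4) card_Alt ?card_ord.
  by rewrite (card_uniqP uniq_even) (_ : size even_perms = 12) // (_ : 4`! = 24)%N //; lia.
apply/idP/idP => [/(allP even_all) // | s_even].
have /(subset_cardP card_even) even_Alt : even_perms \subset ('Alt_('I_4))%g.
  by apply/subsetP => t /(allP even_all); rewrite Alt_even.
by rewrite even_Alt Alt_even.
Qed.

Lemma dotA_patternP (w : 'I_4 -> F4) : dotA w <-> tup4 w \in even_patterns.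
Proof.
rewrite -even_perm_patterns; split => [[s [s_even w_s]] | /mapP[s s_even w_s]].
  rewrite (_ : tup4 w = perm_pattern s) ?map_f ?mem_even_perms //.
  by rewrite /perm_pattern /tup4 !w_s.
by exists s; split; [rewrite -mem_even_perms | apply: tup4_inj].
Qed.

Lemma dotA'_swap (w w' : 'I_4 -> F4) :
  (forall i, w' i = w (tperm o2 o3 i)) -> dotA' w <-> dotA w'.
Proof.
move=> w'E; split=> -[s [s_par w_s]]; exists (tperm o2 o3 * s)%g.
  by rewrite odd_permM odd_tperm s_par; split=> // i; rewrite w'E w_s permM.
by rewrite odd_permM odd_tperm (negbTE s_par); split=> // i; rewrite permM -w_s w'E tpermK.
Qed.

Definition coords_vec (c : icosian) : zvec4 :=
  let '(y0, y1, y2, y3, y4, y5, y6, y7) := icos_coords c in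
  [ffun i : 'I_4 => nth (0, 0) [:: (y0, y1); (y2, y3); (y4, y5); (y6, y7)] i].

Definition vec_coords (y : zvec4) : icosian :=
  ((y o0).1, (y o0).2, (y o1).1, (y o1).2, (y o2).1, (y o2).2, (y o3).1, (y o3).2).

Lemma coords_vecK c : vec_coords (coords_vec c) = icos_coords c.
Proof. by case8 c; rewrite /vec_coords !ffunE. Qed.

Lemma vec_coords_inj : injective vec_coords.
Proof.
move=> y y' [e0 e1 e2 e3 e4 e5 e6 e7]; apply/ffunP => i.
by case: (ord4P i) => ->; apply: injective_projections.
Qed.

Lemma coords_vec_inj : injective coords_vec.
Proof. by move=> c d /(congr1 vec_coords); rewrite !coords_vecK => /icos_coords_inj. Qed.

Lemma F4_of_intr (a b : int) : F4_of a%:~R b%:~R = red (a, b).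
Proof. by rewrite /F4_of /red !intr_F2; case: (odd _); case: (odd _). Qed.

Lemma redv_coords_vec c : tup4 (redv (coords_vec c)) = pattern_of (icos_coords (red2 c)).
Proof.
by rewrite -red2_coords; case8 c; rewrite /tup4 /redv !ffunE /= !F4_of_intr.
Qed.

Lemma dotA_coords_vec c : dotA (redv (coords_vec c)) <-> even_class (red2 c).
Proof. by rewrite dotA_patternP redv_coords_vec. Qed.

Definition icos_of_coords (y : icosian) : icosian :=
  let '(y0, y1, y2, y3, y4, y5, y6, y7) := y in
  (y0, y1, y2, y3, ((y4 - y1 - y2 - y3) %/ 2)%Z, ((y5 - y0 - y1 - y2) %/ 2)%Z,
   ((y6 - y0 - y1 - y3) %/ 2)%Z, ((y7 - y0 - y2 - y3) %/ 2)%Z).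

Lemma icos_of_coordsK y : coords_parity (red2 y) -> icos_coords (icos_of_coords y) = y.
Proof.
have even_diff (a b c d : int) : (a%:~R == b%:~R + c%:~R + d%:~R :> 'F_2) ->
    b + c + d + 2 * ((a - b - c - d) %/ 2)%Z = a.
  rewrite -subr_eq0 -!rmorphD -rmorphB intr_F2_eq0 => /even_int_half.
  by rewrite !opprD !addrA => <-; ring.
by case8 y; case/and4P=> /even_diff e4 /even_diff e5 /even_diff e6 /even_diff e7; apply: pair8_eq.
Qed.

Lemma vec_coords_even y : dotA (redv y) ->
  coords_vec (icos_of_coords (vec_coords y)) = y.
Proof.
move=> /dotA_patternP y_even; apply: vec_coords_inj; rewrite coords_vecK.
apply/icos_of_coordsK/even_pattern_parity.
suff -> : pattern_of (red2 (vec_coords y)) = tup4 (redv y) by [].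
by rewrite /= !F4_of_intr -!surjective_pairing.
Qed.

Definition scaled_vec (n : nat) (y : zvec4) : vec4 :=
  [ffun i => ((y i).1%:~R / 2 ^+ n, (y i).2%:~R / 2 ^+ n)].

Lemma scaled_vecP n y : scaled n y (scaled_vec n y).
Proof. by move=> i; rewrite ffunE. Qed.

Lemma scaledE n y x : scaled n y x -> x = scaled_vec n y.
Proof. by move=> x_y; apply/ffunP => i; rewrite x_y ffunE. Qed.

Lemma scaled_vec_inj n : injective (scaled_vec n).
Proof.
have pow2_neq0 : (2 ^+ n : rat) != 0 by rewrite expf_neq0.
move=> y y' /ffunP y_y'; apply/ffunP => i; move: (y_y' i); rewrite !ffunE => -[e1 e2].
have scaled_inj (a b : int) : a%:~R / 2 ^+ n = b%:~R / 2 ^+ n :> rat -> a = b.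
  by move/(congr1 ( *%R^~ (2 ^+ n))); rewrite /= !divfK // => /intr_inj.
by apply: injective_projections; apply: scaled_inj.
Qed.

Lemma dot_scaled_coords n c :
  dot (scaled_vec n.+1 (coords_vec c)) (scaled_vec n.+1 (coords_vec c)) =
  ((icos_norm1 c)%:~R / 4 ^+ n, (icos_norm2 c)%:~R / 4 ^+ n).
Proof.
have -> : (4 ^+ n : rat) = (2 ^+ n) ^+ 2 by rewrite exprAC expr2 -natrM.
have pow2_neq0 : (2 ^+ n : rat) != 0 by rewrite expf_neq0.
case8 c; rewrite /dot enum_ord4 /= !ffunE /= /qt_add /qt_mul /= exprS.
by congr pair; rewrite !(rmorphD, rmorphM, rmorph_nat) /=; field.
Qed.

Lemma dot_scaled_coords_one n c :
  dot (scaled_vec n.+1 (coords_vec c)) (scaled_vec n.+1 (coords_vec c)) = qt_one <->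
  icos_norm c = (2 ^+ (2 * n), 0).
Proof.
have pow4_neq0 : (4 ^+ n : rat) != 0 by rewrite expf_neq0.
have pow4E : (4 ^+ n : rat) = (2 ^+ (2 * n) : int)%:~R by rewrite rmorphXn exprM.
rewrite dot_scaled_coords /qt_one /icos_norm; split => [[e1 e2] | [-> ->]].
  congr pair; apply: (@intr_inj rat); first by rewrite -pow4E -(divfK pow4_neq0 (_%:~R)) e1 mul1r.
  by rewrite -(divfK pow4_neq0 (_%:~R)) e2 mul0r.
by rewrite -pow4E divff // mul0r.
Qed.

Lemma dotS_sphere_icosians n x : (0 < n)%N ->
  dotS n x <-> x \in [seq scaled_vec n (coords_vec c) | c <- sphere_icosians n].
Proof.
case: n => // n _; split.
  case=> y [/scaledE -> [dot1 y_even]].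
  have y_c := vec_coords_even y_even; set c := icos_of_coords _ in y_c.
  rewrite -y_c in dot1 y_even *; apply: map_f.
  have c_even : even_class (red2 c) by apply/dotA_coords_vec.
  by rewrite mem_sphere_icosians // c_even andbT; apply/eqP/dot_scaled_coords_one.
case/mapP=> c; rewrite mem_sphere_icosians // => /andP[/eqP Nc c_even] ->.
exists (coords_vec c); split; first exact: scaled_vecP.
by split; [apply/dot_scaled_coords_one | apply/dotA_coords_vec].
Qed.

Definition swap_vec (T : Type) (x : {ffun 'I_4 -> T}) : {ffun 'I_4 -> T} :=
  [ffun i => x (tperm o2 o3 i)].

Lemma swap_vecK (T : Type) : involutive (@swap_vec T).
Proof. by move=> x; apply/ffunP => i; rewrite !ffunE tpermK. Qed.

Lemma dot_swap_vec x : dot (swap_vec x) (swap_vec x) = dot x x.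
Proof.
rewrite /dot enum_ord4 /= !ffunE tpermL tpermR !tpermD //.
by rewrite /qt_add /=; congr pair; ring.
Qed.

Lemma dotS'_swap n x : dotS' n x <-> dotS n (swap_vec x).
Proof.
have swap_scaled y x' : scaled n y x' -> scaled n (swap_vec y) (swap_vec x').
  by move=> y_x i; rewrite !ffunE y_x.
have redv_swap y i : redv (swap_vec y) i = redv y (tperm o2 o3 i) by rewrite /redv ffunE.
split=> -[y [x_y [dot1 y_par]]]; exists (swap_vec y).
  split; first exact: swap_scaled.
  by rewrite dot_swap_vec -(dotA'_swap (redv_swap y)).
split; first by move: (swap_scaled _ _ x_y); rewrite swap_vecK.
rewrite -dot_swap_vec; split=> //.
by apply/(dotA'_swap (redv_swap (swap_vec y))); rewrite swap_vecK.
Qed.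

Theorem mainTheorem7 (n : nat) (hn : (1 <= n)%N) :
  has_card (dotS n) (3 * 2 ^ (4 * n + 1))%N /\
  has_card (dotS' n) (3 * 2 ^ (4 * n + 1))%N.
Proof.
set s := [seq scaled_vec n (coords_vec c) | c <- sphere_icosians n].
have s_uniq : uniq s.
  by rewrite map_inj_uniq ?uniq_sphere_icosians // => c d /scaled_vec_inj/coords_vec_inj.
have s_size : size s = (3 * 2 ^ (4 * n + 1))%N by rewrite size_map size_sphere_icosians.
have swap_inj : injective (@swap_vec (rat * rat)) := can_inj (@swap_vecK _).
split; [exists s | exists (map (@swap_vec _) s)]; split=> //.
- by split=> // x; apply: dotS_sphere_icosians.
- by rewrite map_inj_uniq.
split; last by rewrite size_map.
by move=> x; rewrite dotS'_swap dotS_sphere_icosians // -{2}(swap_vecK x) mem_map.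
Qed.
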